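(* Let $M=25$ and let $\beta$, $P_M$, $Q_M$ be as defined below. Then $\beta(t,\gamma)\ge0$ for all $t\ge0$, $\gamma\ge0$, and $P_M(t)-Q_M(t)\ge0$ for all $t\ge0$.
   Context: Define rational functions $c_0=\frac1{\xi+10}$, $d_0=\frac{\xi+23}{(\xi+13)(\xi+10)}$ and, for $j\ge1$, $(c_j,d_j)^T=N_j(c_{j-1},d_{j-1})^T$ with $N_j=\begin{pmatrix}8j+10+\xi&0\\-13&8j+13+\xi\end{pmatrix}^{-1}\begin{pmatrix}8(j-1)&10\\0&8(j-1)\end{pmatrix}$. Let $(\mathring c_j,\mathring d_j)=\mathfrak F^{-1}\big(\frac1{d_0}(c_j,d_j)\big)$ for $j\ge1$ ($\mathfrak F^{-1}$ = inverse Laplace transform), $P_M=8M\mathring c_M+10\mathring d_M$, $Q_M=8M\mathring d_M$. Let $\mathring w_1,\mathring w_2$ solve $\partial_t\mathring w_1-4\gamma\partial_\gamma\mathring w_1+10\mathring w_1-\frac{10}{1+\gamma^2}\mathring w_2=130e^{-23t}$, $\partial_t\mathring w_2-4\gamma\partial_\gamma\mathring w_2+13\mathring w_2-13\mathring w_1=130e^{-23t}$ with $\mathring w_1(0)=-10\frac{\gamma^2}{1+\gamma^2}$, $\mathring w_2(0)=0$, and $\beta:=\mathring w_2-\sum_{j=1}^M\mathring d_j(t)(1+\gamma^2)^{-j}$. *)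

From Stdlib Require Import Reals.
From Coquelicot Require Import Coquelicot.
Open Scope R_scope.

Definition M : nat := 25%nat.

(* N_j = A_j^{-1} B_j with A_j = [[8j+10+xi, 0], [-13, 8j+13+xi]] and
   B_j = [[8(j-1), 10], [0, 8(j-1)]].  Applying A_j^{-1} (lower triangular)
   to B_j (c,d)^T is forward substitution:
     c_j = (8(j-1) c + 10 d) / (8j+10+xi)
     d_j = (13 c_j + 8(j-1) d) / (8j+13+xi). *)
Fixpoint cd (j : nat) (xi : R) : R * R :=
  match j with
  | O => (/ (xi + 10), (xi + 23) / ((xi + 13) * (xi + 10)))
  | S k =>
      let c := fst (cd k xi) in
      let d := snd (cd k xi) in
      let cj := (8 * INR k * c + 10 * d) / (8 * INR (S k) + 10 + xi) in
      let dj := (13 * cj + 8 * INR k * d) / (8 * INR (S k) + 13 + xi) in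
      (cj, dj)
  end.

Definition c (j : nat) (xi : R) : R := fst (cd j xi).
Definition d (j : nat) (xi : R) : R := snd (cd j xi).

Definition has_laplace (f : R -> R) (F : R -> R) : Prop :=
  exists s0 : R, forall xi : R, s0 < xi ->
    is_RInt_gen (fun t => exp (- (xi * t)) * f t)
      (at_point 0) (Rbar_locally p_infty) (F xi).

Definition cont_halfline (f : R -> R) : Prop :=
  forall t, 0 <= t -> forall eps, 0 < eps -> exists delta, 0 < delta /\
    forall s, 0 <= s -> Rabs (s - t) < delta -> Rabs (f s - f t) < eps.

(* f-ring is the inverse Laplace transform of F: the (unique, by Lerch's
   theorem) continuous function on [0,oo) whose Laplace transform is F. *)
Definition inv_laplace (F : R -> R) (f : R -> R) : Prop :=
  cont_halfline f /\ has_laplace f F.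

Definition cont_quadrant (w : R -> R -> R) : Prop :=
  forall t g, 0 <= t -> 0 <= g -> forall eps, 0 < eps -> exists delta,
    0 < delta /\ forall s h, 0 <= s -> 0 <= h ->
      Rabs (s - t) < delta -> Rabs (h - g) < delta ->
      Rabs (w s h - w t g) < eps.

Definition is_w_solution (w1 w2 : R -> R -> R) : Prop :=
  cont_quadrant w1 /\ cont_quadrant w2 /\
  (forall g, 0 <= g -> w1 0 g = - 10 * (g ^ 2 / (1 + g ^ 2)) /\ w2 0 g = 0) /\
  (forall t g, 0 < t -> 0 < g ->
     exists a1 b1 a2 b2 : R,
       differentiable_pt_lim w1 t g a1 b1 /\
       differentiable_pt_lim w2 t g a2 b2 /\
       a1 - 4 * g * b1 + 10 * w1 t g - 10 / (1 + g ^ 2) * w2 t g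
         = 130 * exp (- (23 * t)) /\
       a2 - 4 * g * b2 + 13 * w2 t g - 13 * w1 t g
         = 130 * exp (- (23 * t))).

Definition beta (w2 : R -> R -> R) (dr : nat -> R -> R) (t g : R) : R :=
  w2 t g - sum_f 1 M (fun j => dr j t / (1 + g ^ 2) ^ j).

Definition P_M (cr dr : nat -> R -> R) (t : R) : R :=
  8 * INR M * cr M t + 10 * dr M t.
Definition Q_M (dr : nat -> R -> R) (t : R) : R :=
  8 * INR M * dr M t.

(* For j >= 1, c_j / d_0 and d_j / d_0 are rational functions with simple poles at
   xi = -(8k + 18) and xi = -(8k + 21), k < j (the factor d_0 of c_1 = 10 d_0 / (xi + 18)
   cancels), so c̊_j and d̊_j are exponential sums sum_m w_m e^(-m t) whose rational weights
   are computed exactly by partial fractions; Lerch's uniqueness theorem, proved by a moment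
   argument with peaks that are polynomials in e^(-t), identifies them with the given
   inverse transforms.  In x = e^(-t), P_M - Q_M = 200 c̊_25 - 190 d̊_25 and d̊_25 are
   polynomials, certified nonnegative on [0, 1] by exact Bernstein-type decompositions with
   nonnegative coefficients.  Along the characteristics gamma = gamma_0 e^(-4s), with
   X = 1 / (1 + gamma^2), the pair (w1 + 10 e^(-23 s) - sum_j c̊_j X^j, w2 - sum_j d̊_j X^j)
   solves a cooperative linear system with zero initial data: the recursion for c_j, d_j makes
   the sums telescope, leaving the sources (200 c̊_25 + 10 d̊_25) X^26 and 200 d̊_25 X^26,
   which are nonnegative.  The comparison principle then gives beta >= 0. *)

From Stdlib Require Import Reals Lra Lia QArith Qreals ZArith List.
From Coquelicot Require Import Coquelicot.
Import ListNotations.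
Open Scope R_scope.

Fixpoint sum_upto (f : nat -> R) (n : nat) : R :=
  match n with O => 0 | S n => sum_upto f n + f n end.

Lemma sum_upto_ext f g n :
  (forall i, (i < n)%nat -> f i = g i) -> sum_upto f n = sum_upto g n.
Proof.
  induction n as [|n IH]; intros E; simpl; [reflexivity|].
  rewrite IH by (intros; apply E; lia). rewrite E by lia; reflexivity.
Qed.

Lemma sum_upto_plus f g n :
  sum_upto (fun i => f i + g i) n = sum_upto f n + sum_upto g n.
Proof. induction n as [|n IH]; simpl; [|rewrite IH]; ring. Qed.

Lemma sum_upto_scal a f n : sum_upto (fun i => a * f i) n = a * sum_upto f n.
Proof. induction n as [|n IH]; simpl; [|rewrite IH]; ring. Qed.

Lemma sum_upto_zero n : sum_upto (fun _ => 0) n = 0.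
Proof. induction n as [|n IH]; simpl; [|rewrite IH]; ring. Qed.

Lemma sum_upto_delta m a n : (m < n)%nat ->
  sum_upto (fun i => if Nat.eqb i m then a else 0) n = a.
Proof.
  induction n as [|n IH]; intros Hm; simpl; [lia|].
  destruct (Nat.eqb_spec n m) as [->|Hne].
  - rewrite (sum_upto_ext _ (fun _ => 0)), sum_upto_zero; [ring|].
    intros i Hi; destruct (Nat.eqb_spec i m); [lia | reflexivity].
  - rewrite IH by lia; ring.
Qed.

Lemma sum_upto_shift f n : sum_upto f (S n) = f O + sum_upto (fun i => f (S i)) n.
Proof.
  induction n as [|n IH]; [simpl; ring|].
  change (sum_upto f (S (S n))) with (sum_upto f (S n) + f (S n)).
  rewrite IH; simpl; ring.
Qed.

Lemma sum_upto_telescope (T : nat -> R) n :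
  sum_upto (fun i => T i - T (S i)) n = T O - T n.
Proof. induction n as [|n IH]; simpl; [|rewrite IH]; ring. Qed.

Lemma sum_f_R0_sum_upto f n : sum_f_R0 f n = sum_upto f (S n).
Proof. induction n as [|n IH]; simpl; [|rewrite IH; simpl]; ring. Qed.

Lemma sum_f_1_sum_upto (f : nat -> R) n :
  sum_f 1 (S n) f = sum_upto (fun i => f (S i)) (S n).
Proof.
  unfold sum_f. rewrite Nat.sub_succ, Nat.sub_0_r, sum_f_R0_sum_upto.
  apply sum_upto_ext; intros i _. f_equal; lia.
Qed.

Lemma sum_upto_derive (f df : nat -> R -> R) n t :
  (forall i, (i < n)%nat -> is_derive (f i) t (df i t)) ->
  is_derive (fun t => sum_upto (fun i => f i t) n) t (sum_upto (fun i => df i t) n).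
Proof.
  induction n as [|n IH]; intros H; simpl.
  - apply (is_derive_const 0 t).
  - apply (is_derive_plus (fun t => sum_upto (fun i => f i t) n) (f n)).
    + apply IH; intros; apply H; lia.
    + apply H; lia.
Qed.

Lemma sum_upto_continuous (f : nat -> R -> R) n x :
  (forall i, (i < n)%nat -> continuous (f i) x) ->
  continuous (fun y => sum_upto (fun i => f i y) n) x.
Proof.
  induction n as [|n IH]; intros H; simpl; [apply continuous_const|].
  apply (continuous_plus (V := R_NormedModule) (fun y => sum_upto (fun i => f i y) n) (f n)).
  - apply IH; intros; apply H; lia.
  - apply H; lia.
Qed.

(** * Exponential sums and partial fractions *)

Lemma exp_le_compat x y : x <= y -> exp x <= exp y.
Proof.
  intros H. destruct (Req_dec x y) as [->|Hne]; [lra|].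
  apply Rlt_le, exp_increasing. lra.
Qed.

Lemma exp_neg_le_1 u : 0 <= u -> exp (- u) <= 1.
Proof. intros H. rewrite <- exp_0. apply exp_le_compat. lra. Qed.

(* The rates of c̊_j, d̊_j for j <= 25 are at most 8 * 25 + 13. *)
Definition Nrates : nat := 214.

Definition expsum (w : nat -> R) (t : R) : R :=
  sum_upto (fun i => w i * exp (- (INR i * t))) Nrates.

Definition ratsum (w : nat -> R) (xi : R) : R :=
  sum_upto (fun i => w i / (xi + INR i)) Nrates.

Lemma expsum_linear a v b w t :
  expsum (fun i => a * v i + b * w i) t = a * expsum v t + b * expsum w t.
Proof. unfold expsum. rewrite <- !sum_upto_scal, <- sum_upto_plus. apply sum_upto_ext; intros; ring. Qed.

Lemma ratsum_linear a v b w xi :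
  ratsum (fun i => a * v i + b * w i) xi = a * ratsum v xi + b * ratsum w xi.
Proof.
  unfold ratsum. rewrite <- !sum_upto_scal, <- sum_upto_plus.
  apply sum_upto_ext; intros; unfold Rdiv; ring.
Qed.

Lemma expsum_zero t : expsum (fun _ => 0) t = 0.
Proof.
  unfold expsum. rewrite (sum_upto_ext _ (fun _ => 0)); [apply sum_upto_zero | intros; ring].
Qed.

Lemma ratsum_zero xi : ratsum (fun _ => 0) xi = 0.
Proof.
  unfold ratsum. rewrite (sum_upto_ext _ (fun _ => 0)); [apply sum_upto_zero|].
  intros; unfold Rdiv; ring.
Qed.

Lemma expsum_derive w t :
  is_derive (expsum w) t (expsum (fun i => - INR i * w i) t).
Proof.
  apply (sum_upto_derive (fun i t => w i * exp (- (INR i * t)))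
    (fun i t => - INR i * w i * exp (- (INR i * t)))).
  intros i _. auto_derive; [exact I | ring].
Qed.

Lemma expsum_continuous w t : continuous (expsum w) t.
Proof. apply (ex_derive_continuous (V := R_NormedModule)). eexists. apply expsum_derive. Qed.

Lemma INR_sub_neq0 i j : i <> j -> INR i - INR j <> 0.
Proof. intros H E. apply H, INR_eq. lra. Qed.

(* [expsum (solve_coef v m y0)] is the solution of [y' = - m y + expsum v],
   [y 0 = y0], and [ratsum (solve_coef v m y0) xi = (ratsum v xi + y0) / (xi + m)]
   is its partial fraction decomposition; both need [v m = 0]. *)
Definition pfrac (v : nat -> R) (m j : nat) : R :=
  if Nat.eqb j m then 0 else v j / (INR m - INR j).

Definition solve_coef (v : nat -> R) (m : nat) (y0 : R) (i : nat) : R :=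
  if Nat.eqb i m then y0 - sum_upto (pfrac v m) Nrates else pfrac v m i.

Lemma solve_coef_pfrac v m y0 i :
  solve_coef v m y0 i
  = pfrac v m i + (if Nat.eqb i m then y0 - sum_upto (pfrac v m) Nrates else 0).
Proof. unfold solve_coef, pfrac. destruct (Nat.eqb i m); ring. Qed.

Lemma ratsum_solve_coef v m y0 xi : (m < Nrates)%nat -> v m = 0 -> 0 < xi ->
  ratsum (solve_coef v m y0) xi = (ratsum v xi + y0) / (xi + INR m).
Proof.
  intros Hm Hv Hxi. unfold ratsum.
  assert (Hp : forall i, 0 < xi + INR i) by (intros i; pose proof (pos_INR i); lra).
  rewrite (sum_upto_ext _ (fun i => / (xi + INR m) * (v i / (xi + INR i))
     + (/ (xi + INR m) * pfrac v m i
        + if Nat.eqb i m then (y0 - sum_upto (pfrac v m) Nrates) / (xi + INR m) else 0))).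
  - rewrite !sum_upto_plus, !sum_upto_scal, sum_upto_delta by exact Hm.
    field. specialize (Hp m); lra.
  - intros i _. unfold solve_coef, pfrac. pose proof (Hp i). pose proof (Hp m).
    destruct (Nat.eqb_spec i m) as [->|Hne].
    + rewrite Hv. field. lra.
    + pose proof (INR_sub_neq0 _ _ (not_eq_sym Hne)). field. repeat split; lra.
Qed.

Lemma expsum_solve_coef_derive v m y0 t : v m = 0 ->
  is_derive (expsum (solve_coef v m y0)) t
    (- INR m * expsum (solve_coef v m y0) t + expsum v t).
Proof.
  intros Hv. eapply is_derive_ext; [reflexivity | ].
  replace (- INR m * expsum (solve_coef v m y0) t + expsum v t)
    with (expsum (fun i => - INR i * solve_coef v m y0 i) t); [apply expsum_derive|].
  unfold expsum. rewrite <- sum_upto_scal, <- sum_upto_plus. apply sum_upto_ext. intros i _.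
  unfold solve_coef, pfrac. destruct (Nat.eqb_spec i m) as [->|Hne].
  - rewrite Hv; ring.
  - pose proof (INR_sub_neq0 _ _ (not_eq_sym Hne)). field. assumption.
Qed.

Lemma expsum_solve_coef_0 v m y0 : (m < Nrates)%nat -> expsum (solve_coef v m y0) 0 = y0.
Proof.
  intros Hm. unfold expsum.
  rewrite (sum_upto_ext _ (fun i => pfrac v m i
     + if Nat.eqb i m then y0 - sum_upto (pfrac v m) Nrates else 0)).
  - rewrite sum_upto_plus, sum_upto_delta by exact Hm. ring.
  - intros i _. rewrite Rmult_0_r, Ropp_0, exp_0, Rmult_1_r. apply solve_coef_pfrac.
Qed.

Lemma solve_coef_out v m y0 i : i <> m -> v i = 0 -> solve_coef v m y0 i = 0.
Proof.
  intros Hi Hv. unfold solve_coef, pfrac.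
  destruct (Nat.eqb_spec i m); [lia|]. rewrite Hv. unfold Rdiv; ring.
Qed.

Lemma exp_neg_lim c : 0 < c ->
  filterlim (fun t => exp (- (c * t))) (Rbar_locally p_infty) (locally 0).
Proof.
  intros Hc.
  apply (is_lim_comp (fun y => exp y) (fun t => - (c * t)) p_infty 0 m_infty).
  - apply is_lim_exp_m.
  - replace m_infty with (Rbar_opp (Rbar_mult c p_infty)).
    + apply is_lim_opp, is_lim_scal_l, is_lim_id.
    + simpl. destruct (Rle_dec 0 c) as [Hc'|]; [|lra].
      destruct (Rle_lt_or_eq_dec 0 c Hc'); [reflexivity | lra].
  - exists 0. intros; discriminate.
Qed.

Lemma laplace_exp a c : 0 < c ->
  is_RInt_gen (fun t => a * exp (- (c * t))) (at_point 0) (Rbar_locally p_infty) (a / c).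
Proof.
  intros Hc.
  set (F := fun t => - (a / c) * exp (- (c * t))).
  assert (HD : forall t, is_derive F t (a * exp (- (c * t)))).
  { intros t. unfold F. auto_derive; [exact I|]. field. lra. }
  apply (is_RInt_gen_ext (Derive F)).
  { apply filter_forall. intros _ z _. apply is_derive_unique, HD. }
  replace (a / c) with (0 - F 0) by (unfold F; rewrite Rmult_0_r, Ropp_0, exp_0; field; lra).
  apply is_RInt_gen_Derive.
  - apply filter_forall. intros _ z _. eexists; apply HD.
  - apply filter_forall. intros _ z _.
    apply (continuous_ext (fun t => a * exp (- (c * t)))).
    + intros; symmetry; apply is_derive_unique, HD.
    + apply (ex_derive_continuous (V := R_NormedModule)). auto_derive; exact I.
  - intros P HP. unfold filtermap, at_point. apply locally_singleton, HP.
  - unfold F. replace (locally 0) with (locally (- (a / c) * 0)) by (f_equal; ring).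
    apply (filterlim_comp _ _ _ (fun t => exp (- (c * t))) (fun y => - (a / c) * y) _ (locally 0)).
    + apply exp_neg_lim, Hc.
    + apply (filterlim_scal_r (K := R_AbsRing) (V := R_NormedModule)).
Qed.

Lemma laplace_expsum w xi : 0 < xi ->
  is_RInt_gen (fun t => exp (- (xi * t)) * expsum w t)
    (at_point 0) (Rbar_locally p_infty) (ratsum w xi).
Proof.
  intros Hxi. unfold expsum, ratsum. generalize Nrates. intros n. induction n as [|n IH].
  - assert (H := laplace_exp 0 1 Rlt_0_1). unfold Rdiv in H. rewrite Rmult_0_l in H.
    revert H. apply is_RInt_gen_ext. apply filter_forall. intros _ t _. simpl. ring.
  - apply (is_RInt_gen_ext (fun t => plus
        (exp (- (xi * t)) * sum_upto (fun i => w i * exp (- (INR i * t))) n)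
        (w n * exp (- ((xi + INR n) * t))))).
    + apply filter_forall. intros _ t _. unfold plus. cbn -[exp INR sum_upto].
      replace (exp (- ((xi + INR n) * t))) with (exp (- (xi * t)) * exp (- (INR n * t)))
        by (rewrite <- exp_plus; f_equal; ring).
      simpl sum_upto. ring.
    + apply (is_RInt_gen_plus (V := R_NormedModule) (Fa := at_point 0)
        (Fb := Rbar_locally p_infty)); [exact IH|].
      apply laplace_exp. pose proof (pos_INR n). lra.
Qed.

(** * The inverse transforms c̊_j and d̊_j *)

(* The recursion of [cd] divided by d_0.  The zero sequences at k = 0 are placeholders:
   c_0 enters c_1 with weight 8 * 0, and d_0 / d_0 = 1 enters c_1 / d_0 = 10 / (xi + 18)
   through the initial value 10. *)
Fixpoint cd_coef (k : nat) : (nat -> R) * (nat -> R) :=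
  match k with
  | O => (fun _ => 0, fun _ => 0)
  | S k =>
      let c := fst (cd_coef k) in
      let d := snd (cd_coef k) in
      let c' := solve_coef (fun i => 8 * INR k * c i + 10 * d i) (8 * k + 18)
                  (if Nat.eqb k 0 then 10 else 0) in
      (c', solve_coef (fun i => 13 * c' i + 8 * INR k * d i) (8 * k + 21) 0)
  end.

Definition ccoef (k : nat) : nat -> R := fst (cd_coef k).
Definition dcoef (k : nat) : nat -> R := snd (cd_coef k).

Definition cring (k : nat) : R -> R := expsum (ccoef k).
Definition dring (k : nat) : R -> R := expsum (dcoef k).

Lemma ccoef_S k :
  ccoef (S k) = solve_coef (fun i => 8 * INR k * ccoef k i + 10 * dcoef k i) (8 * k + 18)
                  (if Nat.eqb k 0 then 10 else 0).
Proof. reflexivity. Qed.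

Lemma dcoef_S k :
  dcoef (S k) = solve_coef (fun i => 13 * ccoef (S k) i + 8 * INR k * dcoef k i) (8 * k + 21) 0.
Proof. reflexivity. Qed.

Lemma cd_coef_support k i :
  ((8 * k + 10 < i)%nat -> ccoef k i = 0) /\ ((8 * k + 13 < i)%nat -> dcoef k i = 0).
Proof.
  revert i. induction k as [|k IH]; intros i; [split; reflexivity|].
  assert (Hc : (8 * S k + 10 < i)%nat -> ccoef (S k) i = 0).
  { intros H. rewrite ccoef_S. apply solve_coef_out; [lia|].
    destruct (IH i) as [H1 H2]. rewrite H1, H2 by lia. ring. }
  split; [exact Hc|]. intros H. rewrite dcoef_S. apply solve_coef_out; [lia|].
  destruct (IH i) as [_ H2]. rewrite Hc, H2 by lia. ring.
Qed.

Lemma INR_8_plus k a : INR (8 * k + a) = 8 * INR k + INR a.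
Proof. rewrite plus_INR, mult_INR. simpl INR. ring. Qed.

Lemma ratsum_ccoef_S k xi : (k < 25)%nat -> 0 < xi ->
  ratsum (ccoef (S k)) xi
  = (8 * INR k * ratsum (ccoef k) xi + 10 * ratsum (dcoef k) xi + (if Nat.eqb k 0 then 10 else 0))
    / (xi + 8 * INR k + 18).
Proof.
  intros Hk Hxi. rewrite ccoef_S, ratsum_solve_coef, ratsum_linear, INR_8_plus.
  - f_equal. simpl INR. ring.
  - unfold Nrates; lia.
  - destruct (cd_coef_support k (8 * k + 18)) as [H1 H2]. rewrite H1, H2 by lia. ring.
  - exact Hxi.
Qed.

Lemma ratsum_dcoef_S k xi : (k < 25)%nat -> 0 < xi ->
  ratsum (dcoef (S k)) xi
  = (13 * ratsum (ccoef (S k)) xi + 8 * INR k * ratsum (dcoef k) xi) / (xi + 8 * INR k + 21).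
Proof.
  intros Hk Hxi. rewrite dcoef_S, ratsum_solve_coef, ratsum_linear, INR_8_plus.
  - f_equal; [simpl INR; ring|]. simpl INR. ring.
  - unfold Nrates; lia.
  - destruct (cd_coef_support (S k) (8 * k + 21)) as [H1 _].
    destruct (cd_coef_support k (8 * k + 21)) as [_ H2]. rewrite H1, H2 by lia. ring.
  - exact Hxi.
Qed.

Lemma d0_pos xi : 0 < xi -> 0 < d 0 xi.
Proof.
  intros H. unfold d; simpl.
  apply Rdiv_lt_0_compat; [lra|]. apply Rmult_lt_0_compat; lra.
Qed.

Lemma ratsum_cd_coef k xi : (k < 25)%nat -> 0 < xi ->
  ratsum (ccoef (S k)) xi = c (S k) xi / d 0 xi /\
  ratsum (dcoef (S k)) xi = d (S k) xi / d 0 xi.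
Proof.
  intros Hk Hxi. pose proof (d0_pos xi Hxi) as Hd0.
  assert (Hcd : forall k, c (S k) xi = (8 * INR k * c k xi + 10 * d k xi) / (8 * INR (S k) + 10 + xi)
                  /\ d (S k) xi = (13 * c (S k) xi + 8 * INR k * d k xi) / (8 * INR (S k) + 13 + xi))
    by (intros; split; reflexivity).
  induction k as [|k IH].
  - assert (Hc : ratsum (ccoef 1) xi = c 1 xi / d 0 xi).
    { rewrite ratsum_ccoef_S by (lia || lra). change (ccoef 0) with (fun _ : nat => 0).
      change (dcoef 0) with (fun _ : nat => 0). rewrite ratsum_zero, (proj1 (Hcd O)), Nat.eqb_refl.
      simpl INR. field. split; lra. }
    split; [exact Hc|].
    rewrite ratsum_dcoef_S, Hc by (lia || lra). change (dcoef 0) with (fun _ : nat => 0).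
    rewrite ratsum_zero, (proj2 (Hcd O)). simpl INR. field. split; lra.
  - destruct IH as [IHc IHd]; [lia|].
    pose proof (pos_INR k).
    assert (Hc : ratsum (ccoef (S (S k))) xi = c (S (S k)) xi / d 0 xi).
    { rewrite ratsum_ccoef_S, IHc, IHd, (proj1 (Hcd (S k))) by (lia || lra).
      change (if Nat.eqb (S k) 0 then 10 else 0) with 0. rewrite !S_INR. field. split; lra. }
    split; [exact Hc|].
    rewrite ratsum_dcoef_S, Hc, IHd, (proj2 (Hcd (S k))) by (lia || lra).
    rewrite !S_INR. field. split; lra.
Qed.

Lemma cring_O t : cring 0 t = 0.
Proof. apply expsum_zero. Qed.

Lemma dring_O t : dring 0 t = 0.
Proof. apply expsum_zero. Qed.

Lemma cring_derive k t : (k < 25)%nat ->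
  is_derive (cring (S k)) t
    (- (8 * INR k + 18) * cring (S k) t + 8 * INR k * cring k t + 10 * dring k t).
Proof.
  intros Hk. unfold cring, dring.
  replace (- (8 * INR k + 18) * expsum (ccoef (S k)) t
           + 8 * INR k * expsum (ccoef k) t + 10 * expsum (dcoef k) t)
    with (- INR (8 * k + 18) * expsum (ccoef (S k)) t
          + expsum (fun i => 8 * INR k * ccoef k i + 10 * dcoef k i) t)
    by (rewrite expsum_linear, INR_8_plus; simpl INR; ring).
  rewrite ccoef_S. apply expsum_solve_coef_derive.
  destruct (cd_coef_support k (8 * k + 18)) as [H1 H2]. rewrite H1, H2 by lia. ring.
Qed.

Lemma dring_derive k t : (k < 25)%nat ->
  is_derive (dring (S k)) t
    (- (8 * INR k + 21) * dring (S k) t + 13 * cring (S k) t + 8 * INR k * dring k t).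
Proof.
  intros Hk. unfold cring, dring.
  replace (- (8 * INR k + 21) * expsum (dcoef (S k)) t
           + 13 * expsum (ccoef (S k)) t + 8 * INR k * expsum (dcoef k) t)
    with (- INR (8 * k + 21) * expsum (dcoef (S k)) t
          + expsum (fun i => 13 * ccoef (S k) i + 8 * INR k * dcoef k i) t)
    by (rewrite expsum_linear, INR_8_plus; simpl INR; ring).
  rewrite dcoef_S. apply expsum_solve_coef_derive.
  destruct (cd_coef_support (S k) (8 * k + 21)) as [H1 _].
  destruct (cd_coef_support k (8 * k + 21)) as [_ H2]. rewrite H1, H2 by lia. ring.
Qed.

Lemma cring_init k : (k < 25)%nat -> cring (S k) 0 = if Nat.eqb k 0 then 10 else 0.
Proof. intros Hk. unfold cring. rewrite ccoef_S. apply expsum_solve_coef_0. unfold Nrates; lia. Qed.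

Lemma dring_init k : (k < 25)%nat -> dring (S k) 0 = 0.
Proof. intros Hk. unfold dring. rewrite dcoef_S. apply expsum_solve_coef_0. unfold Nrates; lia. Qed.

(** * Exact rational arithmetic *)

Fixpoint qsum (l : list Q) : Q :=
  match l with nil => 0%Q | a :: l' => Qred (a + qsum l')%Q end.

Definition Qnat (n : nat) : Q := inject_Z (Z.of_nat n).

Definition qpfrac (l : list Q) (m j : nat) : Q :=
  if Nat.eqb j m then 0%Q else Qred (nth j l 0%Q / (Qnat m - Qnat j))%Q.

Definition qsolve_coef (l : list Q) (m : nat) (y0 : Q) : list Q :=
  let s := qsum (map (qpfrac l m) (seq 0 Nrates)) in
  map (fun i => if Nat.eqb i m then Qred (y0 - s)%Q else qpfrac l m i) (seq 0 Nrates).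

Definition qlin (a : Q) (l1 : list Q) (b : Q) (l2 : list Q) : list Q :=
  map (fun i => Qred (a * nth i l1 0 + b * nth i l2 0)%Q) (seq 0 Nrates).

Fixpoint qcd_coef (k : nat) : list Q * list Q :=
  match k with
  | O => (repeat 0%Q Nrates, repeat 0%Q Nrates)
  | S k =>
      let (c, d) := qcd_coef k in
      let c' := qsolve_coef (qlin (8 * Qnat k) c 10 d) (8 * k + 18)
                  (if Nat.eqb k 0 then 10%Q else 0%Q) in
      (c', qsolve_coef (qlin 13 c' (8 * Qnat k) d) (8 * k + 21) 0%Q)
  end.

Definition represents (l : list Q) (v : nat -> R) : Prop :=
  forall i, (i < Nrates)%nat -> Q2R (nth i l 0%Q) = v i.

Lemma Q2R_Qred q : Q2R (Qred q) = Q2R q.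
Proof. apply Qeq_eqR, Qred_correct. Qed.

Lemma Q2R_Qnat n : Q2R (Qnat n) = INR n.
Proof. unfold Qnat, Q2R; simpl. rewrite INR_IZR_INZ. field. Qed.

Lemma Q2R_inject_Z z : Q2R (inject_Z z) = IZR z.
Proof. unfold Q2R; simpl. field. Qed.

Lemma nth_map_seq (f : nat -> Q) i n : (i < n)%nat -> nth i (map f (seq 0 n)) 0%Q = f i.
Proof.
  intros H. rewrite (nth_indep _ _ (f 0%nat)) by (rewrite length_map, length_seq; exact H).
  rewrite map_nth, seq_nth by exact H. reflexivity.
Qed.

Lemma Q2R_qsum_seq (f : nat -> Q) s n :
  Q2R (qsum (map f (seq s n))) = sum_upto (fun i => Q2R (f (s + i)%nat)) n.
Proof.
  revert s. induction n as [|n IH]; intros s.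
  - unfold Q2R; simpl; field.
  - cbn [seq map qsum]. rewrite Q2R_Qred, Q2R_plus, IH, sum_upto_shift, Nat.add_0_r.
    f_equal. apply sum_upto_ext. intros i _. do 2 f_equal. lia.
Qed.

Lemma represents_qpfrac l v m j : represents l v -> (j < Nrates)%nat ->
  Q2R (qpfrac l m j) = pfrac v m j.
Proof.
  intros Hr Hj. unfold qpfrac, pfrac. destruct (Nat.eqb_spec j m) as [|Hne].
  - unfold Q2R; simpl; field.
  - pose proof (INR_sub_neq0 _ _ (not_eq_sym Hne)) as Hd.
    rewrite Q2R_Qred, Q2R_div; [rewrite Q2R_minus, !Q2R_Qnat, Hr by exact Hj; reflexivity|].
    intros E. apply Qeq_eqR in E. rewrite Q2R_minus, !Q2R_Qnat in E.
    apply Hd. rewrite E. unfold Q2R; simpl; field.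
Qed.

Lemma represents_solve_coef l v m y0 :
  represents l v -> represents (qsolve_coef l m y0) (solve_coef v m (Q2R y0)).
Proof.
  intros Hr i Hi. unfold qsolve_coef, solve_coef. rewrite nth_map_seq by exact Hi.
  destruct (Nat.eqb i m); [|apply represents_qpfrac; assumption].
  rewrite Q2R_Qred, Q2R_minus, Q2R_qsum_seq. f_equal.
  apply sum_upto_ext. intros j Hj. apply represents_qpfrac; assumption.
Qed.

Lemma represents_lin a l1 b l2 v1 v2 : represents l1 v1 -> represents l2 v2 ->
  represents (qlin a l1 b l2) (fun i => Q2R a * v1 i + Q2R b * v2 i).
Proof.
  intros H1 H2 i Hi. unfold qlin. rewrite nth_map_seq by exact Hi.
  rewrite Q2R_Qred, Q2R_plus, !Q2R_mult, H1, H2 by exact Hi. reflexivity.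
Qed.

Lemma Q2R_8_Qnat k : Q2R (8 * Qnat k) = 8 * INR k.
Proof. rewrite Q2R_mult, Q2R_Qnat. f_equal. unfold Q2R; simpl; field. Qed.

Lemma Q2R_integer z : Q2R (Qmake z 1) = IZR z.
Proof. unfold Q2R; simpl; field. Qed.

Lemma represents_cd_coef k :
  represents (fst (qcd_coef k)) (ccoef k) /\ represents (snd (qcd_coef k)) (dcoef k).
Proof.
  induction k as [|k [Hc Hd]].
  - split; intros i Hi; cbn [qcd_coef fst snd]; rewrite nth_repeat;
      cbv [ccoef dcoef cd_coef fst snd]; unfold Q2R; simpl; field.
  - cbn [qcd_coef]. destruct (qcd_coef k) as [cq dq]. cbn [fst snd] in *.
    assert (Hc' : represents (qsolve_coef (qlin (8 * Qnat k) cq 10 dq) (8 * k + 18)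
                                (if Nat.eqb k 0 then 10%Q else 0%Q)) (ccoef (S k))).
    { rewrite ccoef_S.
      replace (if Nat.eqb k 0 then 10 else 0) with (Q2R (if Nat.eqb k 0 then 10%Q else 0%Q))
        by (destruct (Nat.eqb k 0); unfold Q2R; simpl; field).
      pose proof (represents_solve_coef _ _ (8 * k + 18) (if Nat.eqb k 0 then 10%Q else 0%Q)
                    (represents_lin (8 * Qnat k) _ 10 _ _ _ Hc Hd)) as H.
      rewrite Q2R_8_Qnat, Q2R_integer in H. exact H. }
    split; [exact Hc'|]. rewrite dcoef_S.
    pose proof (represents_solve_coef _ _ (8 * k + 21) 0%Q
                  (represents_lin 13 _ (8 * Qnat k) _ _ _ Hc' Hd)) as H.
    rewrite Q2R_8_Qnat, !Q2R_integer in H. exact H.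
Qed.

(** * Polynomial positivity certificates *)

Fixpoint zpoly_eval (p : list Z) (x : R) : R :=
  match p with [] => 0 | a :: p' => IZR a + x * zpoly_eval p' x end.

Fixpoint zpoly_add (p q : list Z) : list Z :=
  match p, q with
  | [], q => q
  | p, [] => p
  | a :: p', b :: q' => (a + b)%Z :: zpoly_add p' q'
  end.

Definition zpoly_mul_1mx (p : list Z) : list Z := zpoly_add p (map Z.opp (0%Z :: p)).

Definition zpoly_shift (k : nat) (p : list Z) : list Z := repeat 0%Z k ++ p.

Fixpoint bern_acc (bs : list Z) (p : list Z) (k : nat) : list Z :=
  match bs with
  | [] => p
  | b :: bs' => bern_acc bs' (zpoly_add (zpoly_mul_1mx p) (zpoly_shift k [b])) (S k)
  end.

(* [x ^ a * (1 - x) ^ b * sum_k bs_k x ^ k (1 - x) ^ (n - k)], with [n + 1 = length bs]: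
   nonnegative on [0, 1] as soon as all [bs_k] are. *)
Definition cert_poly (a b : nat) (bs : list Z) : list Z :=
  zpoly_shift a (Nat.iter b zpoly_mul_1mx
    (match bs with [] => [] | b0 :: bs' => bern_acc bs' [b0] 1 end)).

Lemma zpoly_eval_add p q x : zpoly_eval (zpoly_add p q) x = zpoly_eval p x + zpoly_eval q x.
Proof.
  revert q; induction p as [|a p IH]; intros q; [simpl; ring|].
  destruct q as [|b q]; simpl; [ring|]. rewrite IH, plus_IZR. ring.
Qed.

Lemma zpoly_eval_mul_1mx p x : zpoly_eval (zpoly_mul_1mx p) x = (1 - x) * zpoly_eval p x.
Proof.
  unfold zpoly_mul_1mx. rewrite zpoly_eval_add.
  assert (Hopp : forall q, zpoly_eval (map Z.opp q) x = - zpoly_eval q x).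
  { induction q as [|a q IH]; simpl; [ring|]. rewrite IH, opp_IZR. ring. }
  rewrite Hopp. simpl. ring.
Qed.

Lemma zpoly_eval_shift k p x : zpoly_eval (zpoly_shift k p) x = x ^ k * zpoly_eval p x.
Proof. unfold zpoly_shift. induction k as [|k IH]; simpl; [ring|]. rewrite IH. ring. Qed.

Lemma zpoly_eval_bern_acc_nonneg bs p k x :
  0 <= x <= 1 -> forallb (Z.leb 0) bs = true -> 0 <= zpoly_eval p x ->
  0 <= zpoly_eval (bern_acc bs p k) x.
Proof.
  revert p k; induction bs as [|b bs IH]; intros p k Hx Hbs Hp; simpl; [exact Hp|].
  apply andb_prop in Hbs as [Hb Hbs]. apply Z.leb_le, IZR_le in Hb.
  apply IH; [exact Hx | exact Hbs|].
  rewrite zpoly_eval_add, zpoly_eval_mul_1mx, zpoly_eval_shift. simpl.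
  pose proof (pow_le x k (proj1 Hx)). apply Rplus_le_le_0_compat; apply Rmult_le_pos; lra.
Qed.

Lemma zpoly_eval_cert_nonneg a b bs x :
  0 <= x <= 1 -> forallb (Z.leb 0) bs = true -> 0 <= zpoly_eval (cert_poly a b bs) x.
Proof.
  intros Hx Hbs. unfold cert_poly. rewrite zpoly_eval_shift.
  apply Rmult_le_pos; [apply pow_le; lra|].
  induction b as [|b IH]; simpl.
  - destruct bs as [|b0 bs]; simpl; [lra|].
    simpl in Hbs. apply andb_prop in Hbs as [Hb0 Hbs]. apply Z.leb_le, IZR_le in Hb0.
    apply zpoly_eval_bern_acc_nonneg; [exact Hx | exact Hbs | simpl; lra].
  - rewrite zpoly_eval_mul_1mx. apply Rmult_le_pos; lra.
Qed.

Lemma zpoly_eval_sum p x :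
  zpoly_eval p x = sum_upto (fun i => IZR (nth i p 0%Z) * x ^ i) (length p).
Proof.
  induction p as [|a p IH]; [reflexivity|]. cbn [zpoly_eval length].
  rewrite sum_upto_shift, IH, <- sum_upto_scal. simpl. f_equal; [ring|].
  apply sum_upto_ext; intros; simpl; ring.
Qed.

Lemma exp_neg_INR_mult i t : exp (- (INR i * t)) = exp (- t) ^ i.
Proof.
  induction i as [|i IH]; simpl pow.
  - rewrite Rmult_0_l, Ropp_0, exp_0. reflexivity.
  - rewrite <- IH, <- exp_plus, S_INR. f_equal. ring.
Qed.

(* A passing check means [D * expsum v t = zpoly_eval p (exp (- t))] when [wl] represents [v]. *)
Definition cert_check (wl : list Q) (D : Z) (p : list Z) : bool :=
  Nat.eqb (length p) Nrates &&
  forallb (fun i => Qeq_bool (nth i wl 0%Q * inject_Z D) (inject_Z (nth i p 0%Z)))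
    (seq 0 Nrates).

Lemma expsum_nonneg_of_cert wl v D a b bs t :
  represents wl v -> cert_check wl D (cert_poly a b bs) = true ->
  forallb (Z.leb 0) bs = true -> (0 < D)%Z -> 0 <= t -> 0 <= expsum v t.
Proof.
  intros Hr Hc Hbs HD Ht. unfold cert_check in Hc. apply andb_prop in Hc as [Hl Hc].
  apply Nat.eqb_eq in Hl. rewrite forallb_forall in Hc.
  apply IZR_lt in HD.
  assert (E : expsum v t * IZR D = zpoly_eval (cert_poly a b bs) (exp (- t))).
  { rewrite zpoly_eval_sum, Hl. unfold expsum. rewrite Rmult_comm, <- sum_upto_scal.
    apply sum_upto_ext. intros i Hi. rewrite <- Hr, exp_neg_INR_mult by exact Hi.
    assert (Hq := Hc i ltac:(apply in_seq; lia)). apply Qeq_bool_eq, Qeq_eqR in Hq.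
    rewrite Q2R_mult, !Q2R_inject_Z in Hq. rewrite <- Hq. ring. }
  assert (Hx : 0 <= exp (- t) <= 1)
    by (split; [apply Rlt_le, exp_pos | apply exp_neg_le_1, Ht]).
  apply (Rmult_le_reg_r (IZR D)); [exact HD|]. rewrite Rmult_0_l, E.
  apply zpoly_eval_cert_nonneg; assumption.
Qed.

(* Exact certificates, computed offline: [PQ_denom * (200 c̊_25 - 190 d̊_25)] and
   [dring25_denom * d̊_25] are [cert_poly 18 24 PQ_bern] and [cert_poly 18 25 dring25_bern]
   evaluated at x = e^(-t). *)
Definition PQ_denom : Z := 1859456117901446122279559251996332610702531587395036770738173697327104.
Definition PQ_bern : list Z := [
16166106336614649047439962040242834716765476621830904928083095185397542625;
3152390735639856564250792597847352769769267941257026460976203561152520811875;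
305781901357066086732326881991193218667618990301931566714691745431794518751875;
19671934852748377697520069229608036947338624140746308133639467535080776005620300;
944247957555828290435577057318329116152193508866197127613873437055364571361727600;
36069896443899071391571532889861923617761173667121329636867240541896558110243218800;
1142193567501421103071202143472664459657437863181673738162818810719088224047366554000;
30838423617045365397615653753156933987098350536679872066708033728556119346810314284000;
724676545989614043741138935230266329308941454318089541341040075064902891842612656876400;
15056436605893071358805323472726770493862911472799256740767081885793583115996677828482800;
280032224519507112898831177780176337257381521617046673690587481930021704893349983635116400;
4709265045809287731061620526739163943140105707195126674298347801853319659887073566918300800;
72201837458110797895519245138281037701204131299492972580901794101635189359080860226922843200;
1016263268977648860975934988581141555845491937872652720683802091950637506999328614867645619200;
13209633506531690996211723929899762278162659123736828869136183493436366363033650067269558656000;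
159371059232916211273241472850536567069834994405468340434373010386659569271476554880771208771200;
1792597493246203491334714878125438041812230316807304858931393446732359524296477954978373393296800;
18871063043543572332319779051405369699639851957158854921400640633470396657227380892041181056719200;
186569754301814231704210349299332285525487019853425437346124934914505811527279339664234175563061600;
1737582458729037123991812115174500119849149563587608310908535564190477796906916466919356640975785600;
15286180728799518297836590189838285473407697611219947874056326867044278586581568940962993044643590400;
127342756045442681281292031370323753652970204929288306028554979773034308227980731179558939487713984000;
1006797547256632951377178473390863335333651393800190033969726690127457068772705093917384347233592896000;
7569824539692817832939405675510646134250980400311880496722343558142500858886277077623116708901824576000;
54226515453241919492135321109685066079699011341463709364737856562944001961826034966771808884142802720000;
370731065542041598859180012849657348910305082190216767670070155098847472021653592526177108799781630880000;
2422743548537431527717859967049834670989726333090227168956586488709059070096355766799264131433089432992000;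
15155986173366002896864710022391599827128378646056530484200683499520308045040003568115012018363494175180800;
90880223937053054264791948795311145681412342625643035048031962219020277971137169963464128180611364597120000;
522999313769523369276776082562441587726212474865368154679156004209610488943364678925172550457527651499929600;
2891876340334668990123490386741867801850769691855654730109456392779274376547043986345105254608403571519590400;
15380534350764671348920001417367653806330125476245485563151822680288474317865874154959290090959224128874240000;
78761070708232611069885804593950682174187563716008660585181152539522866202473017105827955586784842515433670400;
388693805165333425708979914730553238479583688304842337660361381607686961603925272960001585328421430046706208000;
1850296117813840025449777506618087657424534140911111139054333103060172506397155246414318258618771780012837612800;
8502975140045327885632875515446107000640285171110407250701164979554090715700033018584858794254821581456447104000;
37751453614049712622731945209562625964629258622154564315758600081553359484887022436136435084285502946296071577600;
162049213862520084887671349928111896187497419028592336268900024754862435330210072487709062070580615861140588236800;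
672992043537068102663243717090267645294680014120168411334558156588734114560202940305762915734044046481138700185600;
2705859425004866017684832357437259456962042529076960061309153722500757494679995007679897943221996737228040862515200;
10539012059287700239894906225079995468228930427402351685433315651762794572858915773833993123214953325112935505510400;
39787500842614992968416767061119916668029441821701141561171892540043086783624287736419888649920907573000722047385600;
145674952939966024613943207663900614317187971949882275885087435881773079938172576028527075713574908819573849959219200;
517537155156102215945100778927135737796811048450513973515054433326865125057649222682386028629586945918270881125990400;
1784974310851251132877483986886427503612336522129599421370186578122593722525756517878417347739888928687517776675635200;
5979442958364078570975379835850401203319587440768422870471942549009395574280015058213001834426523924582705904096051200;
19463556244094134227017640466906547343421933291227617963452153587378471928791070294290641387411548020829399637336064000;
61588729586894692328996516629431721237185926295728701984008271838494220654061869754464479892502815309699971796017152000;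
189528190317394671390853617807813304688202266038402697065054921220842034927751088914723774748355292594763518870706176000;
567423640342962715562824766835497350478250837306329538978018853241188337355662893069515946562293268521291951890081792000;
1653338072820597865536857662477793051218949922130403475687768251130339869169129694587549980847386904168185313948248064000;
4690170646458034134725195453529051607876879752825160476486997171582159962013040473824259420258581384173783025510231244800;
12957863061614685887349232206106011658121637110827991999479562029118401412507299721652498090816207145814411434595008512000;
34876606222069991717205384881136263879321218109566904491404887952670952317893141558389653886914516435065573388205064192000;
91479358709998400466936095102363787793382477711773379814411038413553074163227101357277304158527194011532293064064938803200;
233897728238608126620345195461683750767487010990151218550746249336414060750206108045572886784112379925917782978489935462400;
583126923262178647177727525868656995639526476259484225220095596852845475918932167503539559771740405927554275904005711462400;
1417911468517622246347619463952901414198231701924186538540430841023847205652373808529270060632536534280596108531268468736000;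
3363516732849345359096810024652178720179431614109044744278675535450648247726563238388922703256118727967046340785210540032000;
7785761091358833678533583574962468809475183446833107905015649342068310834990021739771816203707476007051837871271383426662400;
17590223050501144644744590663195130987438396838669852815335001094772569022160530566383110265410738311926462584013695995084800;
38797134125406925801303265556759744692846205733124593503260109525063183986656432167962140342268350449177475898879189660467200;
83555845301498478090561397900724137380655467624525587989590061505697314809091164928683744980653717399510059485589357933363200;
175747675469172294432319122101743962858823067641051508225219437448613304306860863753099165342702249081166459307471459241164800;
361094223024964269013175868482825322106206597809374691801525638122366486618269408032337876244307164932425937735153351378534400;
724850501367493876077250826296263335070652571179588002414060509945508985242098379700964764777967838288042457203361561269043200;
1421832080418138795134939104630206791143041312397928856943208499424777485138576293589996449239138683026345951219562708187545600;
2725784581938187766010273711647630620121284651919107079303939547723314162454348620107941483848254362293292941584363871305728000;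
5107942598087243401592060227703957237544572326099121770779486290257791514690886845721469448250579179464254328315164802023424000;
9357853795816103166127086465252721581987693488699407153516284069065835375253357768834845853740920955273924624371617350942720000;
16762681973923377426006114261141673848657823048644110153430987823230915323083225981825426570407300052329405731149278982255411200;
29363363595550174161099410312118520742197492045783183761011371267421358716626773371547071888108340162849352593896638076682240000;
50305803800886317861996181063433870217945869203895397444550198087520380745628518837764268643391451732460705356474676498792448000;
84300917372089894685945048812076066615246061272211624665757348947187788755676526911608835649058693467947557243240073200533504000;
138196615495885473916816713456752156585271624856281765306817107735200971695809642501818059874230612669217482603736309986361344000;
221645804052723532184456947318406289548235419385343526914272889734938806075126332435435131430494697838653608030377110477471744000;
347825892340850828680103718317348829896486240986153108203419338276932783106808220835542663926517777985105662606384977869799424000;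
534127716315202760135593462442137424677827478338960308473876990148683784922892059206305422464518246079146049265402421161492480000;
802688331222619263682995833112197441710332988227267631328376063567737317194028109076110839808338823557637103268945187573858304000;
1180599418813126434454723459930366421444742485104577887827181016537008317620166684753412837209963093726796065065137265829740544000;
1699591255448178816533871982651856178313611049803824442207892000303136919907086828736225304710717998713318689182177960598437888000;
2394984218698029273364915807427488612790181679971288098162570657010072707522352732598409483162572615242619896585937202211192832000;
3303729250338202680862149973759913013189845086001339272170895520538499597137368739813695362446758180284907284154740573361405952000;
4461436449756582190518618815021862012974822534835950715421086528691008343516188661449345556147169487600564032194542612815806464000;
5898421146402343062184220371928132247927690730862613981019722861938390742459349090179508566382965416671773778720015030905995264000;
7634972678477402823549508573349375988279081808215436821912403978801113952407052730552756339518882833533609690860175820337446912000;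
9676252543770922572678491335336268131354666200170619435769488312943351988888764305275459659538307866431634571676780691151912960000;
12007422155908236582646518004913899618880681102231590979010848202821225194662312793727169643437450198133600708995613661423730688000;
14589743292364240700311114757225281225123679661238727836215551734763311488508108021762384342712350289264408402317072046361673728000;
17358441952731252390532201820141603591853801777782534193954947491876759092978821571820208476942613189175353436200223330030059520000;
20223043164485584786960176577500425055594712773504488156388491861721478997499779015346201068294584390937499984448940269834862592000;
23070654764512573757435159104230711168935153030523121653353012188008366386364350915903337842295686548128265969263985346161410048000;
25772315609232698897806124337071030964726657397403783638560931030574614241746059205653388449404334773890409666752855981053444096000;
28192073217955494618882748657382095869989021141907207493958949517742599643001539069409300943526746913590465462389193130171695104000;
30197990170569836183201441707578377439078991794105670789869887515704472936365473408499195204558250348491203478131046327930322944000;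
31673885363253664613960467540444332828696790244360435991192133451557353770474133879528795859408766979987076130639255666052562944000;
32530380020049989229647586898798840278068306967322342128212697219179912128960009125138369455197689099152293098287307790806417408000;
32713800592823712113992277493064916584232709683612547179128648987090612287590901552226324395995141068663977993338476928994115584000;
32211713142846263088881382255665508957829922472516319414873925005195610818492543117491079770367500406229465836746858794166779904000;
31054300324093828785811813666844778519495648003336780740593297569702523003606873741333286097122370509501635988056114153792733184000;
29311371399443152954159190136779828310954216449191849681152337265467563623920601241544799239263825537697073546248406018555904000000;
27085415334137249119321365663034236551847948426021414891649917251930501488154913305481981028371706751356505945536308952443125760000;
24501655125401381619219097317420684054049056128174918617506189531141208780192197752398564455375744031455382638820342860280233984000;
21696441412183013361126437144120345644288833563627007086090733699580502853389027673660241949105610835802201248825583175991296000000;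
18805474079662333020585940160856562317275613605189287588333001656407184906652564672821768430753017042999119578453949720979046400000;
15953248577151436015312625098869217144815094737927102347548248655499851660978647412211094919180189117829404512006276661087567872000;
13244823333917365651611416515611997398027978194392423125026023023459651259186809372855371650101151528862070977834254842873249792000;
10760567355898741429694157219867354213041619863427082060989579081863948251059606327973185438580483803844806155284054241049575424000;
8554062935369443445120735379158218647546841054580810532499969972553832093622682133978098406137953208729546745596134185341288448000;
6652895566699394231802211578918425826104835172862878582646071047674714267526559071634591801787936030009115274930817722094714880000;
5061729997690126064127011968767857957155489442416152153104805238929330059172752356998189900011443979159925805402407504948756480000;
3766885371944496457506947425323357879561910721670572954684061807112966651877512017555921129373828740744481481731133960695578624000;
2741587708221566409408213679025828717306299518118794691272244006063920506648738376618584385732332680852981552984893234654216192000;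
1951170292689475227002525955163843018730554107553015305091592581290437380751598984231144016409089732042728920260760394264477696000;
1357669717185330170207076651306693986634774802053639219458637714538739925641417562215450112497516930934033798373001801074999296000;
923479181361673085348176159449095543388948483619804867997936789619780014530884867405204514445611602286542608025484108687736832000;
613928029426467265962232885123218017219681512360487606653212786637651160964098912993918915344440710147260025688605241762643968000;
398826102483501321663635597932929216854132112697566686219196796738276560484552171141610573714061207454741566966764883759071232000;
253127088199562838409392484056499006554523915821921049189587694383604780615841815710505041557573867364319175578611578598064128000;
156924341756489986497314637852900645622111305872510959707087217080128546680221660904490030881535256694599804484385424531259392000;
95003718800570747749458009690280186669312225440417659822270036062100082774119504108090727541977582785612723747834120663728128000;
56154606503223265426876869998531010612878937127790191471648319924841145730387576526952544891865214111565486489925892454744064000;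
32397699111955160756146684977009089324469689027396425977418389599222554803671460681360893347871511926537543498389425575952384000;
18239364167478895768103775111286958919543120709565582563399512588758774892056343042247417104946525085886960756484122070745088000;
10017228368552049817853391586570078501313944410165211915414167973413962455812281497424920318420612073139226327879159778377728000;
5365322618175123991392024505103800162296286603607219271334613876142930939625348435794126895462438552666680373983042934407168000;
2801653930071975665936224695588754658782293341640000500313862509065058165661851157922120703224175119950998576672489282207744000;
1425788029029269179260881054428205679557700683718855938780256195678974278257350533084473056894055667748786542853345110917120000;
706902651751496155168155522585170379374679616653722077873267699303005319517302321815432474250633698709189973095771086520320000;
341319467650240893545219527153769455095318365891214187471180400207248281924251750671053177671166527766106249536671896829952000;
160428513540893774779607842086233883978209055766500087201833461674349073927599636754442928105026780131425405851129996115968000;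
73372318597522312351013421348389961374252883275072164351766249063800078873471479528487863911171640180840197754179926622208000;
32637156714547894415043769478854392746525637342498371723779541883376539474305346913842967520231885902098238734625809629184000;
14112636859936386073273608943896568634734551064709969122437363465565409230158696455627824799818416376666576697417262956544000;
5929149067652620806825266250452039567447867911704474050171445035664922232723598800140828364219291134353682038402167341056000;
2418926071260311162751940959560992532658408903266982081838996020894743382446466567658088961311910351070760612979510607872000;
957724040679348070425108770567656955857787836814219190397150496112148964282312039630407817493563629916878485330553995264000;
367764503254829008652844876153805697194416548956005839795432861674998611145070644796988633085542061467212755755297931264000;
136872407098982113391335245659278745040882253346479700705626640081589862134829833967404937238026550840457577741884063744000;
49335895646265167157776282796993537244385818569801222536964203173041451308125259431902531592305690710865149520188014592000;
17209682235107195712516612803952368327872235700898220451404034844587331800722598415349344426777953457595899846022135808000;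
5804733942643720493610078320258700709981134959405529255088390223460833636553003991016891197966364134529080275253592064000;
1891477053387894210416332093693657137892140658174346802222817756681299695605043015978628950926453093952546226145591296000;
594851745565241235305278483455230267470197230486032877521245431632914164374769346959760238084807289882065416744861696000;
180364761338727167238587853247953475197656682917979004655621738560883006892798520331821174595484950688909832784707584000;
52667102169314519313447898552933511927795201181140252948670625869540148137723234052296566696165901011368343431544832000;
14792457297520438977910573572359036227576468614115933793318172998364656641985892779174091845877988120122615643766784000;
3990954655237739773549358932148101089189942368886055914216257245675884313382366011147104549711975834626146506375168000;
1032807905822950339975005991158593696296757208826656230559941875803102659067049898228242392857273162809417106718720000;
255965236507663466481733095948874569990629523894047876958130423126581929942000087581161156741402296640542670323712000;
60646713718807826331638692126542228109347358406541154143429557361699364927628762855500702849150691629167494037504000;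
13710997829412724216155621574772923200406745272536338052136372030718675706184292706439885075760008888258343731200000;
2951551116158239346524122812465426032746647743267006893573497741950241981683585921246838719284933089306534215680000;
603579948998334174683346054147124207113250336022500452066069731236505838626003054872405510735628425816902205440000;
116947187032003295596147114069282578169497086798805667957825850046870270058973019612246015296876101543693123584000;
21406504198988528988822382171344470824278684781152603180129298804630243837493680047074172751958267106655469568000;
3689533342316364965963394202845638815508868155496225385981588511931796616017364776277580512547707876316020736000;
596543636295925045668123153722418477668414892178497625525705866082949897459020788244097270884482103778476032000;
90094814272905675961725053795763653966988775639135380449320597173464953707792597824353734551770406225707008000;
12647361552031927218109700618380212494186313157420819141564908974001502342182521121755280048370705917542400000;
1640753637339883286347744121027263455815692393336459492365886868436361339360594595670289462897126328500224000;
195381146552234068532829138546770763964824304691885947492616596092909155094889856583649184465036349800448000;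
21183284264275099207762323294007249244621496316597860867147249625789121930191686426225644589896066662400000;
2070573102360577988019508770584149841997810366767224974353389180483554099776099734155016366187977113600000;
180243503781462091810866063522301311077259297609341811860092776112608050347715546309235806084794417152000;
13757542395720169928423167408306555815934862661493733158837613091650975409917600121395831977032024064000;
902107546586792328361287142586033767374721963738298848232368310933609786898963251572870722738978816000;
49414524684204331959988722416944901577040617329123915791021745930131265409641307001636239521611776000;
2171076819991210203845144275630874204192873978515019144480571384262924985352821427457353354051584000;
71739944003284226992716032054289915561872106119227144317109715113953103693570176684225548255232000;
1584976501181817711064764612163506756090872278280940595693116917709087986865088742667753357312000;
17562066495089392920385203458875421120120468457406543996599633437219811488809847564185632768000]%Z.
Definition dring25_denom : Z := 3718912235802892244559118503992665221405063174790073541476347394654208.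
Definition dring25_bern : list Z := [
9652677101789050913641988575025201627341326464654982997625804602296179765;
1882272034848864928160187772129914317331558660607721684537031897447755054175;
182580387380339898031538213896601688781161190078949003400092094052432240254975;
11745954063257398347735089679188763829113992880185026784808618314283111414621760;
563798471453951667400967204866124610321209368104141575184801557040625117885289520;
21536542087845329863336720806136845628683758894520094290928093354716612329953260720;
681960969136721965682817542263130180391256975065069197708569633009164734081766645200;
18411750189067097133860839668890782657622925034670149917213170500694564237354191677600;
432636781779464262606889034963267793863787382184683399743175502188531630768515846177840;
8988140834324366080337849580591737768801028023406572913146535609696741337065086415532080;
167153351132229409579067025956992006440971638546840551370524970382390901332369205440159280;
2810667422398790172212770536035889776907259795235972928238012684600384979447929731803655360;
43086630021671517114047037966328860759541650523904934594597791404269488743308895893024671040;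
606353684898892735417118131905325261100543444132710616210393278953358919100521801665546824960;
7879932445718567593204178501626543875169722437189819938572202186695578339433786871723800867840;
95046994525811881256801618655589525878922969875481689319451902541382409855834870901616576097920;
1068791603951112624648761842087789842696367105847444157539359954239590707940313373131665681356320;
11247885527008093217348158576294090731029590514765829371111404206789145697393213564543105743392480;
111163399927970665431800425144310136739546843619488256095595024894852768705264174027719586056355040;
1034886384943325998323236916528054951740331648055448818795535781145758081901916665943786532563738880;
9100229190993686770146998428240678981031720607189001093579680876295392671207009971475672489119683840;
75772549718322831836324163645604119470226541801862189034015395730637554723394304672744928318410150400;
598743950407914399473374956521619867460258756936941044741626726426097265362463258318760955971073241600;
4499061520181926438619588996664743816584863904892338794807229418834964114155361665694014246283939648000;
32207684730423746005391293691781285819031886606784497096852747001252504548695816844680642091000875464960;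
220035010479906831276367095210774658948867872606105517025623000457465092162225501190383499137535557059840;
1436803241828595697193782383272417274258558687683331869389897025574550206727650254464775994963789484780800;
8980527733117078046386920437889639870253545880594696849740935734029559182384811252232426862860452249666560;
53800251763379783856785998615158578429325682335124007860646080744670157533859552466501462247418438583987200;
309301078168009349643141446182518602053729632174493627943473545155249304851544954948926496902553414296002560;
1708410443339025564815987085580516405405264544022473573446807707848318845460012191398422868804807254102691840;
9075729215956606239672073748377946040929730904586103301619169131150245292604254979674902548713499365399500800;
46417671830963970570427124097891624636840767139244429065959073323213136275099513104941258872404128997626090240;
228772390917097338199516542501123650654701812080010027370597283367915692904812968173544100062934969271513657600;
1087483430376908876890676599403620719914657642159113296032273473616043554810603956483836440802010656650356650240;
4989964274575394719071448302325963543007329960195300322479035061569058935915011727107300650076470677594826321920;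
22118899611087515634421556135021028649282757487913585226552772985648745762062020651065845629874883453978157342720;
94784373211170034516012967192273555264422255305382235722025173809125898675834646561416036568393732975420617953280;
392929665022991255039485197632584120702529571952827582724861866371197091550245453288298723172967309174867949957120;
1576807561256198290927149093347359076364698354800720953659017582997956878984323019179637496857303048649753810206720;
6129059096680413603421470426111396299408666715583690132419982985069104987978647435718062874272806462436188608512000;
23089323697111988940363744231883142817110393523943984391909077160709740830604563934016299213870229287861756942499840;
84346793370001299203423827769015935568857110632105580784727216513730342765027566580769597039243016632699385323438080;
298944875771258478121254354553125882098099475078271063424452092671380214498861061339021524432981487824594599553433600;
1028471841919531361515677782145106711413992009479072455588667786859098079354866621982622440766050830149797850451968000;
3436174117003249891947908659443003805890268767515982452228445928713300829588711598253885510116519564290339848690401280;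
11154032503525540105251833153272964612933561042548891995225432848484522355399103739658699486956452270202460373223014400;
35192133937663532374273335064996856970602751452362066296776873308342205658262010357831209494421078120411433837626982400;
107966800691933442308849278658064639342035479204491433303549601812571953043021430396650942227178761510124227432652390400;
322204292067292094200963680389337349096954169947151098208558293038149204809205848201048133959873408408327174929897308160;
935677997156927012761598869354075783122934442749515363307534535531028763139732531354505591155359627038125068529289216000;
2644999139451702072459246771891693246133119550800614358001902969714534768242123465047982849365324966170360507420272885760;
7280673676829275060537332843006455368740063847889245203287204634566115397081175890737632221713666155008020342935902617600;
19520936614928945225593406066528619734660284096066136806237595055942416731415109732789743986845161122638737142100544716800;
50996753302173387831743551399767114891135907575916310650010220664079557475899446960404090533378223973585432826781340794880;
129843689970389643261264916343798862362841344377719376822094993408014733702254293008037273879925659553525256054635218862080;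
322294934940876195666947193512966909437183893228459880132663244455403137569642852742091507946651200135933138998494070702080;
780104479787200110132163283643541301066716391229190561836354438316988048758314253154829791713230158497063439021903643279360;
1841729360794158489206180352019578415573882807479900312945820061398061135513042649459799962752831794291723304457740477399040;
4242039034390902158316044933709922124295434172755782162111674001120856552855500782771576085319766761454205086405607819837440;
9534470274630891070489261058788866825281379519055562480874991850186596695814120157671336446660221654794947054600433505402880;
20916267143508697785601793713489606424084138342541329182753982386172160996270824228888545882274412719696021427258474092298240;
44794605360053515031447642245459950007287452202856647761905724376078410685206819276733029195301661831318077499243421195304960;
93670998110843220902445721398547328794464492737961647095506107763386152590258000393773199833993864574392726539181549436272640;
191294449027944026702985386392449069875092035431807527293292297796244831855054589186632331210609760892474874872344716849643520;
381586786481980541228021813881502580013514938734662080720537146455837990939051762497115501469777239796946120561115493164974080;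
743618495657377156613915168022748596628824205787265252303108713761665410911548418338137030519872677283716641467746082482094080;
1415928825648278073457105842919744068400803886050295215537092960776493252925195217496824992837298417154698438498102738472140800;
2634704957308546982227750252318329101151938307694680255893261278552688817518344295527296676322777531652391159604810894357299200;
4791631192177623336116959326855627872247061520162264154887864799851568478533078380083830831804658579591103457471429370576896000;
8518316612389077446939798034299057896165354219261046319718849298318307673988835915812382380164758140306973530750295657252126720;
14804648630651471150708045259070631310277428633652986295306904691290812436002326539887045759809127020256320769401452031639552000;
25157538350338329217683288354307580486711034328078885669328849980842322597939027248487807800846203920965605838460853614097203200;
41803496299642643042641191591548068608452671266578751122316827897849618779844384157319554984583132339210470903392278683294105600;
67932439167001371267966955161000567601775274548614309217575274143894778701444191209171666944867129715970280157264935884029952000;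
107970407177706834429337048711383355699653520194395765718961839011881650736807490334897288908752432195504285182305306720191119360;
167855324493812249210303612008259642637449781808279525297067093795286936373346804536564065550083814952008019718421377031077888000;
255273346932147581114867658490051836452114563024937792688934240644664485417922597991761656123836919014016217880788334906494156800;
379795792960977514467342384009663446249173486394994561607011194935974209903607218441891765446842839842338799890709034301810278400;
552841709599357532578189513196029384825483093678276292468073898592270208511286836335202991745438454417838381650387101065989324800;
787383673089664795321251014918639344795743050789252857731642853722318436675791699384885511618313944510246785199533700993347747840;
1097320026076672135337886268403935678398769354025841385370484664759908865481528228961955003729261522804405909237260149907521536000;
1496460446614320718891156605675577965725913911889652711203395690339701215062421604054074946937183489264902896204564442542086553600;
1997116417590875312360782495167046514193883621324297512431891655305998062852885995648666189971237045296384465379737953899684823040;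
2608352811195138514202944862553371923052494477105927609889968840730881001321582158723587599801459906774162141096163014459292385280;
3334035155852464635537741221359196302114316383467535250318668627000927505087516990105287070263859129655231890415789050232727142400;
4170887287505453475697161525969261019696601329294323341299943899551510831939683945703209365646647188874063889438344563019638374400;
5106839479875102808172733021104306921408303715151790401416101170584462958030384232436626378869079934067165406487600643672165580800;
6119979402089168093460399161737234391159003034337314880250192106669341641691178043239733509520118369319140197281021778058941562880;
7178401214856732522018965682777276124520969736869632183536906634818577547925765611681697702645611553246005150115658159541830287360;
8241172594716138803437632125812500197746973362436712083921513443079575522918463216464793235188824913692464038160535222021018091520;
9260507317134434035438810081010406434788749555621198827519600316954755716374402263087758750318618788607603485879039944558892810240;
10185057220242922966230857678931230016549559477583982267888625785543037937486915706470388163386475808209187681055630509797760040960;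
10964049089776827103810333687512811036997753742457437477351625600124481578767489552377579533508750029770448554343433750312785018880;
11551824269571179914357387716366319093052648612689753464663926892619694421017663291106738120775102811607250523905758760900849827840;
11912227323067900767426719888142054243578944873211324482201598380175470507794675870194186984657928483874225579299129963817929277440;
12022262878801539276350012836756576428121039477280838467524458930276619028574171137434166366477879678139829614195027525780268646400;
11874509776279943441566005964009300480633732005991589699014051906965469644215303992397258105348870953894949199255517207917389414400;
11477942156650358246517783839527370548118403502609422479706513467406243277995099663033051496407269171637505840237801836256847462400;
10857032230452890003677656638956129559444614629370049390934305685982732804420783784209376856795172183733754119352424294040563875840;
10049258756571002638237755275172153176428907116359030973030041167595895116177897077473105972646684882414910025180891012101392302080;
9101372796177336049695528923675340540591839142414626436097751178941914009897241951205332558660205990556555402408811822546996428800;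
8064936689820206213650046712987649727324584922787345249014836304472568810692383475497249297969744606357317373042447019075541401600;
6991725796635979201783767545846783143591188404725615892206758389539849512363492652422732596047836634837623278212187176027815936000;
5929557030118360752101206996339236425263378649092058242157600871380202796680426556780202489405386461061199685730926738464424591360;
4918995463557146918148806580612495908126618183315140537362833685339936786642958928623524858400443467534964330568913983343029125120;
3991218247612081080059530508464328763406233249866201119381158284242635667692018634248272757422012757029065107667103475727702425600;
3167120480334070271867251373702510917419505250782349010815899657636646853912879248200639295194932366765002215836499957379015639040;
2457567183204129226415207720207275544871833183455154953285441532940958226001159529172979826861706791707319202163434765540634132480;
1864558136423887181207732755748970059944044993130078372289197853281885398515943280769941623094338483062401536346065679260560916480;
1382994347761210959104795236794254334854758160146993416323663892936861176054803862692870874007257709163868021445515758643372359680;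
1002718741125089596264043136299592245050573393032038590267438842521670061837625315929745266583777365107347094379719523011919872000;
710539669834905057110558481790657457763971812102325269888218467314477310971313817353531831275512022572291387329386723628946554880;
492016832795836722125123773427086658278413313988378044346326234036415409219498027955705710893758959977107065479792159850296770560;
332875279722193320990376279523789545082232858369135675396839294276719106377570164406698738335673813238311317968426233266794659840;
219996591709372694982866173598970951951804990557987644662691827174422179374420931087127752573073422701499175690289156422809681920;
142004201182954889349897315134028718163332666758293543433905175019042124772096539563555003816449993593410360162713865867870863360;
89505592383563121229866371046710000439125607628536342631679493920164984729303370797760399396547980088893930279946467359252807680;
55077019764823998905261124582645427513924936957069307659791877519198058045041169510917421513660493578725761973843130426893271040;
33079876800903521841023635947987197014180173019302387147772848037658506042908969407240770621070850250761011088104242546653265920;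
19387708864476591623768272936206030845991262480643179853265643496536250800685541354097122218192673923315455813884629770662051840;
11085312613192162281619435647982996652998026562540481296348087902549520072643835477813683920867716238705496990036422483456819200;
6181748265582700759507618960129012141095636589662366772198604608473168379564275400712790516042675779043753727044540395893555200;
3361186796464130359487203487356600619392598885775080586909421635216144196059152644339925247203520576485406132816128597242675200;
1781396313082873546086387072906695990538798069498603327821245574859346212735646861402678443052224383884045844810201037086392320;
919974341150517953023505599025966039162656181756614439720959377654129445960568923090845497188201547617058589817014253120389120;
462796889252881904733422942294245648877285959627024499567611936616538016048928208278553400276585801978941843524782731873484800;
226698171592191595567885317549217180188296307670541993873160189714933494394137865568007887695131547007183278414611396060774400;
108089179064396503231022866610190123591291141508271512034674941215339836068807310031854851987336171694578703851608946927206400;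
50143718679868766835689987497235778817128631337816704128529886548876568767856201115038194525991984599887309857153982167777280;
22623693424894176278802403301850587855684440233701524423703318626750063974201668957062113862989453121364148929721734245908480;
9922563161754083389662760774193531615574883523038755425590713655920264509015881266479565597874724060197440630501893210112000;
4228493876602848611007595952616772341603873368720446228584892119369192888596989797722798161228225132683740766455181575454720;
1749941048322902689509965588312711471526996891318290253516141754772905462772604199598744807442683747222599911433223232552960;
702905045236360160312891301900542406672186488583225949061119988751135780192268394734982576706301327290716436888023445012480;
273872928614995425866560845572719551360174294046285449337495916090368271833377704650360576054029492342534736525353906339840;
103444425504681627762846205033072533547696708676482570061774494288713647872609797915925903214974672742198646741125195366400;
37851064784791405261155967465609688604981600508212115415578403502438885623193612509794866087823436157487838547831045488640;
13407538596922840838806829615783113649296836263650021310235568396931909981255713620363880187090760968400824635972984504320;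
4593930310970755537935765405084852743177355275548787209278739248595013580549071184070336754339677414566515389802269900800;
1521331816496612103450705892305375643710127929806198929642548384581454204532137607955594211686889692457171561798036357120;
486497268510800531297067666785059242742460087651781693039855918648188219664205310987853906990941803165009302423758438400;
150084765910255891672609016567402135381192534046729401746130723123874651929149727669456282338808276426982520422892830720;
44621312157110537847309931607706326723327721125759707065563158282962083103323190245534042682768971982283790105507266560;
12770580451705137651193920771352696312588627006818254557137394999872759147867163051040938002581185457222761011090554880;
3514096190024688315485526408211480720253187148389518976970634540704975304717848901410034721046430836199607851695472640;
928490992377084056397161024855425047540094529605505190686113692824939852321215838096093069970476271690780687256780800;
235221841825739449835269599897548981056533379128771168534703616083617253482224734310658214519872964821210664167014400;
57046661489550760693075164674998771391963998220056989460166041864963318563731114080576866254965515409410952160870400;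
13221667284506922728736437179099493542833518173920910268925458229495965385881839732817221746754990634772575268372480;
2922948135363259870342077109252987121387652025004305723636149428489376864299588530360471371192309928387979457331200;
615069180310214915207290692875338831886669742162574927531785036459394349871317648527079182780038538065656099635200;
122909095545061317246682458631739309218781722590904531196058388634422087232449863735987351180018198156492668928000;
23263459780183568762481215893974284567002072346252645852555608805495627872907685494565634445613082250573355417600;
4158450340602070276043358669185265250230400399225568307174773353504793021117463193747019655114480068623828254720;
699730902444645442700322140680979754738911315200077919496385394778430459275476185712957303076252189688279859200;
110421966832767138740017477791445713091809532193740955237469162285512546123043793060503144374444539218021580800;
16272502065266985291899269077660236798212777417262395551678378180346686015803413394091037618204762360491540480;
2228393924417755674719446495394935776100881525250285505387643755102191165641235293170053665688893469407313920;
281954203875379092691844872981391241879571833678038815026604988654742208514339568236458398965418726764052480;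
32739890521379728090501635760420385029338620474183121534754310720736166969915026295364416938456498579701760;
3460790002280683340694840476369560983062660233912959840509897387210407689311841667356284412432731445657600;
329762515829008739284941149917360137803528638589153137644425370641867921500239359326290272184354744565760;
27980518917886194406912537542599889726936503822658163958134863160745449152263451003112916765855333744640;
2081597269261158183734540733033608486812478561082941362070649521771623882716559487243350929733236817920;
133035852906319845804792739991251182393493729570658152079486730549768361624152771198500595470927134720;
7102946775138119675003542115611611969380590598520502555419144354643434921294911411833145087471124480;
304214923645091290373810864091422144917479674007548390526275027645090947677255739555137740970393600;
9800997010118469789233459556848886073866527051354948748137516563759901858615731909301181297459200;
211183849603449949867632071592976938969448633200313691559110592082568233152938416959332234035200;
2283068644361621079650076449653804745615660899462850719557952346838575493545280183344132259840]%Z.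

Lemma PQ_cert :
  cert_check (qlin 200 (fst (qcd_coef 25)) (-190) (snd (qcd_coef 25)))
    PQ_denom (cert_poly 18 24 PQ_bern) = true.
Proof. vm_compute. reflexivity. Qed.

Lemma dring25_cert :
  cert_check (snd (qcd_coef 25)) dring25_denom (cert_poly 18 25 dring25_bern) = true.
Proof. vm_compute. reflexivity. Qed.

Lemma PQ_cring_dring_nonneg t : 0 <= t -> 0 <= 200 * cring 25 t - 190 * dring 25 t.
Proof.
  intros Ht. unfold cring, dring. replace (200 * expsum (ccoef 25) t - 190 * expsum (dcoef 25) t)
    with (expsum (fun i => 200 * ccoef 25 i + -190 * dcoef 25 i) t) by (rewrite expsum_linear; ring).
  destruct (represents_cd_coef 25) as [Hc Hd].
  pose proof (represents_lin 200 _ (-190) _ _ _ Hc Hd) as Hr. rewrite !Q2R_integer in Hr.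
  apply (expsum_nonneg_of_cert _ _ _ _ _ _ _ Hr PQ_cert); [vm_compute; reflexivity.. | exact Ht].
Qed.

Lemma dring25_nonneg t : 0 <= t -> 0 <= dring 25 t.
Proof.
  intros Ht. apply (expsum_nonneg_of_cert _ _ _ _ _ _ _ (proj2 (represents_cd_coef 25)) dring25_cert);
    [vm_compute; reflexivity.. | exact Ht].
Qed.

(** * Uniqueness of the Laplace transform *)

Lemma continuous_eps (f : R -> R) x : continuous f x ->
  forall eps, 0 < eps -> exists delta, 0 < delta /\
    forall y, Rabs (y - x) < delta -> Rabs (f y - f x) < eps.
Proof.
  intros Hc eps He. apply continuity_pt_filterlim in Hc.
  destruct (Hc eps He) as [al [Hal H]]. exists al; split; [exact Hal|]. intros y Hy.
  destruct (Req_dec y x) as [->|Hne].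
  - unfold Rminus; rewrite Rplus_opp_r, Rabs_R0; exact He.
  - apply H. split; [split; [constructor | auto] | exact Hy].
Qed.

Lemma eps_continuous (f : R -> R) x :
  (forall eps, 0 < eps -> exists delta, 0 < delta /\
     forall y, Rabs (y - x) < delta -> Rabs (f y - f x) < eps) ->
  continuous f x.
Proof.
  intros H. apply continuity_pt_filterlim. intros eps He.
  destruct (H eps He) as [d [Hd Hy]]. exists d; split; [exact Hd|].
  intros y [_ Hy']. apply Hy, Hy'.
Qed.

Lemma continuous_Rmult (f g : R -> R) x :
  continuous f x -> continuous g x -> continuous (fun y => f y * g y) x.
Proof. intros Hf Hg. exact (continuous_mult (K := R_AbsRing) f g x Hf Hg). Qed.

Lemma continuous_Rplus (f g : R -> R) x :
  continuous f x -> continuous g x -> continuous (fun y => f y + g y) x.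
Proof. intros Hf Hg. exact (continuous_plus (V := R_NormedModule) f g x Hf Hg). Qed.

Lemma continuous_exp_lin c x : continuous (fun u => exp (- (c * u))) x.
Proof. apply (ex_derive_continuous (V := R_NormedModule)). auto_derive. exact I. Qed.

Lemma continuous_exp_neg x : continuous (fun u => exp (- u)) x.
Proof.
  apply (continuous_ext (fun u => exp (- (1 * u)))); [intros; rewrite Rmult_1_l; reflexivity|].
  apply continuous_exp_lin.
Qed.

Lemma is_derive_Rmult (f g : R -> R) x df dg : is_derive f x df -> is_derive g x dg ->
  is_derive (fun y => f y * g y) x (df * g x + f x * dg).
Proof. intros Hf Hg. exact (is_derive_mult (K := R_AbsRing) f g x df dg Hf Hg Rmult_comm). Qed.

Lemma ex_RInt_continuous_R (f : R -> R) a b : (forall u, continuous f u) -> ex_RInt f a b.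
Proof. intros H. apply (ex_RInt_continuous (V := R_CompleteNormedModule)). intros; apply H. Qed.

Lemma is_RInt_gen_lim_RInt f l :
  is_RInt_gen f (at_point 0) (Rbar_locally p_infty) l -> is_lim (fun T => RInt f 0 T) p_infty l.
Proof.
  intros H P HP. destruct (H P HP) as [Qa Qb HQa [N HN] HQ].
  exists N. intros T HT.
  destruct (HQ 0 T HQa (HN T HT)) as [y [Hy Py]]. simpl in Hy.
  rewrite (is_RInt_unique _ _ _ _ Hy). exact Py.
Qed.

Lemma cont_halfline_ext f g : cont_halfline f -> (forall t, f t = g t) -> cont_halfline g.
Proof.
  intros H E t Ht eps He. destruct (H t Ht eps He) as [d [Hd H']].
  exists d; split; [exact Hd|]. intros s Hs Hst. rewrite <- !E. apply H'; assumption.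
Qed.

Lemma cont_halfline_minus f g :
  cont_halfline f -> (forall t, continuous g t) -> cont_halfline (fun t => f t - g t).
Proof.
  intros Hf Hg t Ht eps He.
  destruct (Hf t Ht (eps / 2) ltac:(lra)) as [d1 [Hd1 H1]].
  destruct (continuous_eps g t (Hg t) (eps / 2) ltac:(lra)) as [d2 [Hd2 H2]].
  exists (Rmin d1 d2). split; [apply Rmin_pos; assumption|].
  intros s Hs Hst. pose proof (Rmin_l d1 d2). pose proof (Rmin_r d1 d2).
  specialize (H1 s Hs ltac:(lra)). specialize (H2 s ltac:(lra)).
  apply Rabs_lt_between in H1, H2. apply Rabs_lt_between. lra.
Qed.

Lemma cont_halfline_min f g : cont_halfline f -> cont_halfline g -> cont_halfline (fun t => Rmin (f t) (g t)).
Proof.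
  intros Hf Hg t Ht eps He.
  destruct (Hf t Ht eps He) as [d1 [Hd1 H1]]. destruct (Hg t Ht eps He) as [d2 [Hd2 H2]].
  exists (Rmin d1 d2). split; [apply Rmin_pos; assumption|].
  intros s Hs Hst. pose proof (Rmin_l d1 d2). pose proof (Rmin_r d1 d2).
  specialize (H1 s Hs ltac:(lra)). specialize (H2 s Hs ltac:(lra)).
  apply Rabs_lt_between in H1, H2. apply Rabs_lt_between.
  unfold Rmin. destruct (Rle_dec (f s) (g s)), (Rle_dec (f t) (g t)); lra.
Qed.

(* Values on (-oo, 0) are irrelevant below; extending [h] by the constant [h 0]
   makes it continuous on all of R, as Coquelicot's integration lemmas require. *)
Definition ext_halfline (h : R -> R) (u : R) : R := h (Rmax 0 u).

Lemma ext_halfline_continuous h u : cont_halfline h -> continuous (ext_halfline h) u.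
Proof.
  intros Hh. apply eps_continuous. intros eps He.
  destruct (Hh (Rmax 0 u) (Rmax_l 0 u) eps He) as [d [Hd H]].
  exists d; split; [exact Hd|]. intros y Hy. apply H; [apply Rmax_l|].
  assert (Rabs (Rmax 0 y - Rmax 0 u) <= Rabs (y - u)).
  { unfold Rmax. destruct (Rle_dec 0 y), (Rle_dec 0 u); unfold Rabs;
      repeat destruct (Rcase_abs _); lra. }
  lra.
Qed.

Definition damped_primitive (h : R -> R) (a T : R) : R :=
  RInt (fun u => exp (- (a * u)) * ext_halfline h u) 0 T.

Section DampedPrimitive.

Variables (h : R -> R) (a : R).
Hypothesis h_cont : cont_halfline h.

Lemma damped_integrand_continuous b u :
  continuous (fun u => exp (- (b * u)) * ext_halfline h u) u.
Proof. apply continuous_Rmult; [apply continuous_exp_lin | apply ext_halfline_continuous, h_cont]. Qed.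

Lemma damped_primitive_derive T :
  is_derive (damped_primitive h a) T (exp (- (a * T)) * ext_halfline h T).
Proof.
  apply (is_derive_RInt (V := R_NormedModule)
           (fun u => exp (- (a * u)) * ext_halfline h u) _ 0 T);
    [|apply damped_integrand_continuous].
  apply filter_forall. intros b. apply (RInt_correct (V := R_CompleteNormedModule)).
  apply ex_RInt_continuous_R, damped_integrand_continuous.
Qed.

Lemma damped_primitive_continuous T : continuous (damped_primitive h a) T.
Proof.
  apply (ex_derive_continuous (V := R_NormedModule)). eexists. apply damped_primitive_derive.
Qed.

Lemma damped_primitive_0 : damped_primitive h a 0 = 0.
Proof. apply (RInt_point (V := R_CompleteNormedModule)). Qed.

(* Integration by parts against [exp (- c u)] trades the damping [a] for [a + c]. *)
Lemma RInt_exp_damped_primitive c T : 0 < c ->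
  RInt (fun u => exp (- (c * u)) * damped_primitive h a u) 0 T
  = (damped_primitive h (a + c) T - exp (- (c * T)) * damped_primitive h a T) / c.
Proof.
  intros Hc.
  set (P := damped_primitive h a).
  set (df := fun u => - c * exp (- (c * u)) * P u + exp (- ((a + c) * u)) * ext_halfline h u).
  assert (HD : forall u, is_derive (fun u => exp (- (c * u)) * P u) u (df u)).
  { intros u. eapply is_derive_ext; [reflexivity|].
    replace (df u) with (- c * exp (- (c * u)) * P u
                         + exp (- (c * u)) * (exp (- (a * u)) * ext_halfline h u)).
    - apply (is_derive_Rmult (fun u => exp (- (c * u))) P); [auto_derive; [exact I | ring]|].
      apply damped_primitive_derive.
    - unfold df. rewrite <- Rmult_assoc, <- exp_plus. do 3 f_equal. ring. }
  assert (Hcf : forall u, continuous (fun u => exp (- (c * u)) * P u) u).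
  { intros u. apply continuous_Rmult; [apply continuous_exp_lin | apply damped_primitive_continuous]. }
  assert (Hcd : forall u, continuous df u).
  { intros u. apply continuous_Rplus.
    - apply continuous_Rmult; [|apply damped_primitive_continuous].
      apply continuous_Rmult; [apply continuous_const | apply continuous_exp_lin].
    - apply damped_integrand_continuous. }
  assert (HI := is_RInt_derive (V := R_CompleteNormedModule) _ df 0 T
                  (fun u _ => HD u) (fun u _ => Hcd u)).
  apply is_RInt_unique in HI. unfold df in HI.
  rewrite (RInt_plus (V := R_CompleteNormedModule)) in HI.
  2: { apply ex_RInt_continuous_R. intros u.
       apply continuous_Rmult; [|apply damped_primitive_continuous].
       apply continuous_Rmult; [apply continuous_const | apply continuous_exp_lin]. }
  2: { apply ex_RInt_continuous_R, damped_integrand_continuous. }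
  rewrite (RInt_ext _ (fun u => scal (- c) (exp (- (c * u)) * P u)))
    in HI by (intros; unfold scal; simpl; unfold mult; simpl; ring).
  rewrite (RInt_scal (V := R_CompleteNormedModule)) in HI by (apply ex_RInt_continuous_R, Hcf).
  unfold minus, plus, opp, scal in HI; simpl in HI; unfold mult in HI; simpl in HI.
  unfold P in HI. rewrite damped_primitive_0 in HI. fold (damped_primitive h (a + c) T) in HI.
  fold P in HI |- *.
  set (X := RInt (fun u => exp (- (c * u)) * P u) 0 T) in *.
  match goal with |- ?l = ?r => change (@eq R l r) end.
  apply (Rmult_eq_reg_l c); [|lra]. field_simplify_eq; lra.
Qed.

End DampedPrimitive.

Definition peak (rho x0 u : R) : R := 1 + rho ^ 2 / 2 - (exp (- u) - x0) ^ 2.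

Lemma peak_nonneg rho x0 u : 0 <= rho <= 1 -> 0 <= x0 <= 1 -> 0 <= u -> 0 <= peak rho x0 u.
Proof.
  intros Hrho Hx0 Hu. unfold peak. pose proof (exp_pos (- u)). pose proof (exp_neg_le_1 u Hu).
  assert ((exp (- u) - x0) ^ 2 <= 1) by nra. nra.
Qed.

Lemma peak_le_1 rho x0 u : 0 <= rho -> rho <= Rabs (exp (- u) - x0) -> peak rho x0 u <= 1.
Proof.
  intros Hrho Hfar. unfold peak.
  assert (rho ^ 2 <= (exp (- u) - x0) ^ 2).
  { rewrite <- (pow2_abs (exp (- u) - x0)). apply pow_incr. lra. }
  nra.
Qed.

Lemma peak_ge rho x0 u : 0 <= rho -> Rabs (exp (- u) - x0) <= rho / 2 ->
  1 + rho ^ 2 / 4 <= peak rho x0 u.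
Proof.
  intros Hrho Hnear. unfold peak.
  assert ((exp (- u) - x0) ^ 2 <= (rho / 2) ^ 2).
  { rewrite <- (pow2_abs (exp (- u) - x0)). apply pow_incr. split; [apply Rabs_pos | exact Hnear]. }
  nra.
Qed.

Lemma exp_neg_separated u0 de : 0 <= u0 -> 0 < de -> exists rho, 0 < rho <= 1 /\
  forall u, 0 <= u -> de <= Rabs (u - u0) -> rho <= Rabs (exp (- u) - exp (- u0)).
Proof.
  intros Hu0 Hde.
  set (r1 := exp (- u0) - exp (- (u0 + de))). set (r2 := exp (- (u0 - de)) - exp (- u0)).
  assert (Hr1 : 0 < r1) by (unfold r1; pose proof (exp_increasing (- (u0 + de)) (- u0)); lra).
  assert (Hr2 : 0 < r2) by (unfold r2; pose proof (exp_increasing (- u0) (- (u0 - de))); lra).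
  exists (Rmin r1 r2). pose proof (Rmin_l r1 r2). pose proof (Rmin_r r1 r2).
  split; [split; [apply Rmin_pos; assumption|]|].
  { unfold r1 in *. pose proof (exp_pos (- (u0 + de))). pose proof (exp_neg_le_1 u0 Hu0). lra. }
  intros u Hu Hd. destruct (Rle_dec u u0).
  - rewrite Rabs_left1 in Hd by lra.
    pose proof (exp_le_compat (- (u0 - de)) (- u) ltac:(lra)).
    rewrite Rabs_right; unfold r2 in *; lra.
  - rewrite Rabs_right in Hd by lra.
    pose proof (exp_le_compat (- u) (- (u0 + de)) ltac:(lra)).
    rewrite Rabs_left1; unfold r1 in *; lra.
Qed.

Lemma peak_exists u0 de : 0 <= u0 -> 0 < de -> exists rho d3, 0 < rho <= 1 /\ 0 < d3 < de /\
  (forall u, 0 <= u -> de <= Rabs (u - u0) -> peak rho (exp (- u0)) u <= 1) /\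
  (forall u, Rabs (u - u0) <= d3 -> 1 + rho ^ 2 / 4 <= peak rho (exp (- u0)) u).
Proof.
  intros Hu0 Hde. destruct (exp_neg_separated u0 de Hu0 Hde) as [rho [Hrho Hfar]].
  destruct (continuous_eps _ u0 (continuous_exp_neg u0) (rho / 2) ltac:(lra)) as [d2 [Hd2 Hexp]].
  exists rho, (Rmin de d2 / 2).
  pose proof (Rmin_pos de d2 Hde Hd2). pose proof (Rmin_l de d2). pose proof (Rmin_r de d2).
  split; [exact Hrho | split; [lra | split]].
  - intros u Hu Hd. apply peak_le_1; [lra | apply Hfar; assumption].
  - intros u Hu. apply peak_ge; [lra|]. apply Rlt_le, Hexp. lra.
Qed.

Lemma continuous_pos_near (f : R -> R) u0 : continuous f u0 -> 0 < f u0 -> 0 < u0 ->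
  exists de, 0 < de <= u0 / 2 /\ forall u, Rabs (u - u0) <= de -> f u0 / 2 < f u.
Proof.
  intros Hc Hpos Hu0. destruct (continuous_eps f u0 Hc (f u0 / 2) ltac:(lra)) as [d [Hd Hf]].
  exists (Rmin (d / 2) (u0 / 2)). pose proof (Rmin_l (d / 2) (u0 / 2)). pose proof (Rmin_r (d / 2) (u0 / 2)).
  split; [split; [apply Rmin_pos | ]; lra|].
  intros u Hu. specialize (Hf u ltac:(lra)). apply Rabs_lt_between in Hf. lra.
Qed.

Lemma pow_unbounded x K : 1 < x -> exists k, K <= x ^ k.
Proof.
  intros Hx. destruct (Pow_x_infinity x ltac:(rewrite Rabs_right; lra) K) as [k Hk].
  exists k. specialize (Hk k (le_n k)). rewrite Rabs_right in Hk by (apply Rle_ge, pow_le; lra). lra.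
Qed.

Lemma RInt_exp_neg T : RInt (fun u => exp (- u)) 0 T = 1 - exp (- T).
Proof.
  rewrite (is_RInt_unique _ _ _ _ (is_RInt_derive (V := R_CompleteNormedModule)
             (fun u => - exp (- u)) (fun u => exp (- u)) 0 T
             (fun x _ => ltac:(auto_derive; [exact I | ring]))
             (fun x _ => continuous_exp_neg x))).
  unfold minus, plus, opp; simpl. rewrite Ropp_0, exp_0. ring.
Qed.

Lemma RInt_ge_on_subinterval (J : R -> R) a1 a2 T L :
  (forall u, continuous J u) -> 0 <= a1 <= a2 -> a2 <= T ->
  (forall u, 0 <= u -> 0 <= J u) -> (forall u, a1 <= u <= a2 -> L <= J u) ->
  (a2 - a1) * L <= RInt J 0 T.
Proof.
  intros HJ Ha Ha2 HJ0 HJL.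
  assert (Hex : forall a b, ex_RInt J a b) by (intros; apply ex_RInt_continuous_R, HJ).
  rewrite <- (RInt_Chasles (V := R_CompleteNormedModule) J 0 a1 T (Hex _ _) (Hex _ _)),
    <- (RInt_Chasles (V := R_CompleteNormedModule) J a1 a2 T (Hex _ _) (Hex _ _)).
  unfold plus; simpl.
  assert (0 <= RInt J 0 a1) by (apply RInt_ge_0; [lra | apply Hex | intros; apply HJ0; lra]).
  assert (0 <= RInt J a2 T) by (apply RInt_ge_0; [lra | apply Hex | intros; apply HJ0; lra]).
  assert ((a2 - a1) * L <= RInt J a1 a2).
  { replace ((a2 - a1) * L) with (RInt (fun _ => L) a1 a2) by (rewrite RInt_const; reflexivity).
    apply RInt_le; [lra | apply ex_RInt_const | apply Hex|].
    intros; apply HJL; lra. }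
  lra.
Qed.

Lemma RInt_exp_neg_ge (g : R -> R) B L a1 a2 T :
  (forall u, continuous g u) -> 0 <= B -> 0 <= L -> 0 <= a1 <= a2 -> a2 <= T ->
  (forall u, 0 <= u -> - B <= g u) -> (forall u, a1 <= u <= a2 -> L <= g u) ->
  (a2 - a1) * (exp (- a2) * L) - B <= RInt (fun u => exp (- u) * g u) 0 T.
Proof.
  intros Hg HB HL Ha Ha2 Hlow Hnear.
  set (J := fun u => exp (- u) * g u + B * exp (- u)).
  assert (HJ : forall u, continuous J u).
  { intros u. apply continuous_Rplus; apply continuous_Rmult;
      auto using continuous_exp_neg, continuous_const. }
  assert (HJ0 : forall u, 0 <= u -> 0 <= J u).
  { intros u Hu. unfold J. pose proof (exp_pos (- u)). pose proof (Hlow u Hu). nra. }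
  assert (HJL : forall u, a1 <= u <= a2 -> exp (- a2) * L <= J u).
  { intros u Hu. unfold J. pose proof (exp_le_compat (- a2) (- u) ltac:(lra)).
    pose proof (exp_pos (- a2)). pose proof (exp_pos (- u)). pose proof (Hnear u Hu). nra. }
  pose proof (RInt_ge_on_subinterval J a1 a2 T _ HJ Ha Ha2 HJ0 HJL).
  assert (HIJ : RInt (fun u => exp (- u) * g u) 0 T = RInt J 0 T - B * (1 - exp (- T))).
  { rewrite <- RInt_exp_neg. unfold J.
    rewrite (RInt_plus (V := R_CompleteNormedModule)).
    2: { apply ex_RInt_continuous_R. intros u.
         apply continuous_Rmult; [apply continuous_exp_neg | apply Hg]. }
    2: { apply ex_RInt_continuous_R. intros u.
         apply continuous_Rmult; [apply continuous_const | apply continuous_exp_neg]. }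
    rewrite (RInt_ext (fun x => B * exp (- x)) (fun x => scal B (exp (- x)))) by reflexivity.
    rewrite (RInt_scal (V := R_CompleteNormedModule))
      by (apply ex_RInt_continuous_R, continuous_exp_neg).
    unfold plus, scal; simpl; unfold mult; simpl.
    unfold Rminus. rewrite Rplus_assoc, Rplus_opp_r, Rplus_0_r. reflexivity. }
  pose proof (exp_pos (- T)). assert (B * (1 - exp (- T)) <= B) by nra.
  rewrite HIJ. lra.
Qed.

Section Moments.

Variable phi : R -> R.
Hypothesis phi_cont : forall u, continuous phi u.

Definition moments_vanish (q : R -> R) : Prop :=
  (forall u, continuous q u) /\
  forall n : nat, (1 <= n)%nat ->
    is_lim (fun T => RInt (fun u => exp (- (INR n * u)) * (q u * phi u)) 0 T) p_infty 0.

Lemma moments_vanish_ext q1 q2 : (forall u, q1 u = q2 u) -> moments_vanish q1 -> moments_vanish q2.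
Proof.
  intros E [Hc Hl]. split.
  - intros u. apply (continuous_ext q1 q2); [exact E | apply Hc].
  - intros n Hn. eapply is_lim_ext; [|exact (Hl n Hn)].
    intros T. apply RInt_ext. intros x _. rewrite E. reflexivity.
Qed.

Lemma moments_vanish_exp_neg q : moments_vanish q -> moments_vanish (fun u => exp (- u) * q u).
Proof.
  intros [Hc Hl]. split.
  - intros u. apply continuous_Rmult; [apply continuous_exp_neg | apply Hc].
  - intros n Hn. eapply is_lim_ext; [|exact (Hl (S n) ltac:(lia))].
    intros T. apply RInt_ext. intros x _. rewrite S_INR.
    replace (exp (- ((INR n + 1) * x))) with (exp (- (INR n * x)) * exp (- x))
      by (rewrite <- exp_plus; f_equal; ring).
    simpl. ring.
Qed.

Lemma moments_vanish_lin a q1 b q2 :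
  moments_vanish q1 -> moments_vanish q2 -> moments_vanish (fun u => a * q1 u + b * q2 u).
Proof.
  intros [Hc1 Hl1] [Hc2 Hl2]. split.
  - intros u. apply continuous_Rplus; apply continuous_Rmult; auto using continuous_const.
  - intros n Hn.
    assert (Hi : forall q, (forall u, continuous q u) -> forall T,
               ex_RInt (fun u => exp (- (INR n * u)) * (q u * phi u)) 0 T).
    { intros q Hq T. apply ex_RInt_continuous_R. intros u.
      apply continuous_Rmult; [apply continuous_exp_lin | apply continuous_Rmult; auto]. }
    apply (is_lim_ext (fun T => a * RInt (fun u => exp (- (INR n * u)) * (q1 u * phi u)) 0 T +
                                b * RInt (fun u => exp (- (INR n * u)) * (q2 u * phi u)) 0 T)).
    + intros T.
      rewrite <- !(RInt_scal (V := R_CompleteNormedModule)) by auto.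
      rewrite <- (RInt_plus (V := R_CompleteNormedModule))
        by (apply (ex_RInt_scal (V := R_NormedModule)); auto).
      apply RInt_ext. intros. unfold plus, scal; simpl; unfold mult; simpl; ring.
    + replace (Finite 0) with (Rbar_plus (Rbar_mult a 0) (Rbar_mult b 0)) by (simpl; f_equal; ring).
      apply (is_lim_plus _ _ _ (Rbar_mult a 0) (Rbar_mult b 0));
        [apply is_lim_scal_l, Hl1, Hn | apply is_lim_scal_l, Hl2, Hn | reflexivity].
Qed.

Lemma moments_vanish_peak_pow rho x0 k :
  moments_vanish (fun _ => 1) -> moments_vanish (fun u => peak rho x0 u ^ k).
Proof.
  intros H1. induction k as [|k IH]; [exact H1|].
  apply (moments_vanish_ext (fun u =>
           1 * ((1 + rho ^ 2 / 2 - x0 ^ 2) * peak rho x0 u ^ k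
                + 2 * x0 * (exp (- u) * peak rho x0 u ^ k))
           + -1 * (exp (- u) * (exp (- u) * peak rho x0 u ^ k)))).
  { intros u. unfold peak. simpl. ring. }
  apply moments_vanish_lin; [apply moments_vanish_lin|]; auto using moments_vanish_exp_neg.
Qed.

(* A peak [peak rho x0 ^ k] concentrated at [u0] makes the vanishing moment
   [int e^(-u) peak^k phi] exceed 1 as soon as [phi u0 > 0]. *)
Lemma moments_vanish_nonpos B u0 :
  (forall u, 0 <= u -> Rabs (phi u) <= B) -> moments_vanish (fun _ => 1) -> 0 < u0 -> phi u0 <= 0.
Proof.
  intros HB H1 Hu0. apply Rnot_lt_le. intros Hpos.
  assert (HBp : 0 <= B) by (pose proof (HB u0 (Rlt_le _ _ Hu0)); pose proof (Rabs_pos (phi u0)); lra).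
  destruct (continuous_pos_near phi u0 (phi_cont u0) Hpos Hu0) as [de [Hde Hphi_near]].
  set (m := phi u0 / 2) in *. assert (Hm : 0 < m) by (unfold m; lra).
  destruct (peak_exists u0 de ltac:(lra) ltac:(lra)) as [rho [d3 [Hrho [Hd3 [Hfar Hnear]]]]].
  set (x0 := exp (- u0)). set (La := 1 + rho ^ 2 / 4).
  assert (Hx0 : 0 <= x0 <= 1) by (split; [apply Rlt_le, exp_pos | apply exp_neg_le_1; lra]).
  assert (HLa : 1 < La) by (unfold La; pose proof (pow_lt rho 2 (proj1 Hrho)); lra).
  set (C := (u0 + d3 - (u0 - d3)) * (exp (- (u0 + d3)) * m)).
  assert (HC : 0 < C).
  { unfold C. pose proof (exp_pos (- (u0 + d3))).
    apply Rmult_lt_0_compat; [lra | apply Rmult_lt_0_compat; lra]. }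
  destruct (pow_unbounded La ((B + 2) / C) HLa) as [k Hk].
  apply (Rmult_le_compat_l C) in Hk; [|lra].
  replace (C * ((B + 2) / C)) with (B + 2) in Hk by (field; lra).
  destruct (moments_vanish_peak_pow rho x0 k H1) as [Hqc Hlim].
  specialize (Hlim 1%nat (le_n 1)).
  apply filterlim_locally with (eps := mkposreal 1 Rlt_0_1) in Hlim. destruct Hlim as [T0 HT0].
  set (T := Rmax T0 (u0 + d3)).
  assert (HT : T0 <= T /\ u0 + d3 <= T) by (split; [apply Rmax_l | apply Rmax_r]).
  specialize (HT0 (T + 1) ltac:(lra)).
  change (Rabs (RInt (fun u => exp (- (INR 1 * u)) * (peak rho x0 u ^ k * phi u)) 0 (T + 1) - 0) < 1)
    in HT0.
  rewrite (RInt_ext _ (fun u => exp (- u) * (peak rho x0 u ^ k * phi u))) in HT0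
    by (intros; simpl INR; rewrite Rmult_1_l; reflexivity).
  assert (Hlow : forall u, 0 <= u -> - B <= peak rho x0 u ^ k * phi u).
  { intros u Hu. assert (Hq0 : 0 <= peak rho x0 u ^ k) by (apply pow_le, peak_nonneg; lra).
    destruct (Rle_dec (Rabs (u - u0)) de) as [Hn|Hf].
    - pose proof (Hphi_near u Hn). nra.
    - assert (peak rho x0 u ^ k <= 1).
      { rewrite <- (pow1 k). apply pow_incr.
        split; [apply peak_nonneg; lra | apply Hfar; lra]. }
      pose proof (HB u Hu) as HBu. apply Rabs_le_between in HBu. nra. }
  assert (Hhigh : forall u, u0 - d3 <= u <= u0 + d3 -> La ^ k * m <= peak rho x0 u ^ k * phi u).
  { intros u Hu. assert (Hu' : Rabs (u - u0) <= d3) by (apply Rabs_le_between; lra).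
    pose proof (Hphi_near u ltac:(lra)). pose proof (pow_le La k ltac:(lra)).
    apply Rmult_le_compat; [lra | lra | | lra].
    apply pow_incr. split; [lra | apply Hnear, Hu']. }
  pose proof (RInt_exp_neg_ge (fun u => peak rho x0 u ^ k * phi u) B (La ^ k * m)
                (u0 - d3) (u0 + d3) (T + 1)
                (fun u => continuous_Rmult _ _ u (Hqc u) (phi_cont u)) HBp
                ltac:(pose proof (pow_le La k); nra) ltac:(lra) ltac:(lra) Hlow Hhigh).
  rewrite Rminus_0_r in HT0. apply Rabs_lt_between in HT0.
  assert (C * La ^ k = (u0 + d3 - (u0 - d3)) * (exp (- (u0 + d3)) * (La ^ k * m))) by (unfold C; ring).
  lra.
Qed.

End Moments.

Lemma bounded_of_lim (f : R -> R) (l : R) : (forall u, continuous f u) -> is_lim f p_infty l ->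
  exists B, forall u, 0 <= u -> Rabs (f u) <= B.
Proof.
  intros Hc Hlim. apply filterlim_locally with (eps := mkposreal 1 Rlt_0_1) in Hlim.
  destruct Hlim as [N HN]. set (N' := Rmax 0 N + 1). pose proof (Rmax_l 0 N). pose proof (Rmax_r 0 N).
  destruct (continuity_ab_maj (fun u => Rabs (f u)) 0 N') as [u1 [Hu1 _]].
  { unfold N'; lra. }
  { intros x _. apply (continuity_pt_comp f Rabs); [apply continuity_pt_filterlim, Hc|].
    apply Rcontinuity_abs. }
  exists (Rabs (f u1) + Rabs l + 1). intros u Hu. pose proof (Rabs_pos l). pose proof (Rabs_pos (f u1)).
  destruct (Rle_dec u N') as [HuN|HuN]; [specialize (Hu1 u (conj Hu HuN)); simpl in Hu1; lra|].
  specialize (HN u ltac:(unfold N' in HuN; lra)). change (Rabs (f u - l) < 1) in HN.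
  pose proof (Rabs_triang_inv (f u) l). lra.
Qed.

Section LaplaceUniqueness.

Variables (h : R -> R) (s0 : R).
Hypothesis h_cont : cont_halfline h.
Hypothesis h_laplace : forall xi, s0 < xi ->
  is_RInt_gen (fun t => exp (- (xi * t)) * h t) (at_point 0) (Rbar_locally p_infty) 0.

Lemma damped_primitive_lim xi : s0 < xi -> is_lim (damped_primitive h xi) p_infty 0.
Proof.
  intros Hxi. apply is_RInt_gen_lim_RInt.
  apply (is_RInt_gen_ext (fun t => exp (- (xi * t)) * h t)); [|apply h_laplace, Hxi].
  apply (Filter_prod _ _ _ (fun a => a = 0) (fun b => 0 < b)); [reflexivity | exists 0; auto|].
  intros x y -> Hy u Hu. simpl in Hu. rewrite Rmin_left, Rmax_right in Hu by lra.
  unfold ext_halfline. rewrite Rmax_right by lra. reflexivity.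
Qed.

Lemma laplace_damped_primitive a c : s0 < a -> 0 < c ->
  is_lim (fun T => RInt (fun u => exp (- (c * u)) * damped_primitive h a u) 0 T) p_infty 0.
Proof.
  intros Ha Hc.
  apply (is_lim_ext (fun T => (damped_primitive h (a + c) T
                               - exp (- (c * T)) * damped_primitive h a T) * / c)).
  { intros T. rewrite RInt_exp_damped_primitive by assumption. reflexivity. }
  assert (H1 := damped_primitive_lim (a + c) ltac:(lra)).
  assert (H2 : is_lim (fun T => exp (- (c * T)) * damped_primitive h a T) p_infty 0).
  { replace (Finite 0) with (Rbar_mult 0 0) by (simpl; f_equal; ring).
    apply is_lim_mult; [apply exp_neg_lim, Hc | apply damped_primitive_lim, Ha | exact I]. }
  replace (Finite 0) with (Rbar_mult (Rbar_minus 0 0) (/ c)) by (simpl; f_equal; ring).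
  apply is_lim_scal_r, (is_lim_minus _ _ _ _ _ _ H1 H2). reflexivity.
Qed.

Theorem laplace_zero_unique t : 0 <= t -> h t = 0.
Proof.
  set (a := Rabs s0 + 1).
  assert (Ha : s0 < a) by (unfold a; pose proof (Rle_abs s0); lra).
  set (phi := damped_primitive h a).
  assert (Hpc : forall u, continuous phi u) by (intros; apply damped_primitive_continuous, h_cont).
  destruct (bounded_of_lim phi 0 Hpc (damped_primitive_lim a Ha)) as [B HB].
  assert (Hmom : forall sgn, moments_vanish (fun u => sgn * phi u) (fun _ => 1)).
  { intros sgn. split; [intros; apply continuous_const|]. intros n Hn.
    apply (is_lim_ext (fun T => sgn * RInt (fun u => exp (- (INR n * u)) * phi u) 0 T)).
    - intros T. rewrite <- (RInt_scal (V := R_CompleteNormedModule)).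
      + apply RInt_ext. intros. unfold scal; simpl; unfold mult; simpl. ring.
      + apply ex_RInt_continuous_R. intros u. apply continuous_Rmult; [apply continuous_exp_lin | apply Hpc].
    - replace (Finite 0) with (Rbar_mult sgn 0) by (simpl; f_equal; ring).
      apply is_lim_scal_l, laplace_damped_primitive; [exact Ha|]. apply lt_0_INR. lia. }
  assert (Hsign : forall sgn, Rabs sgn = 1 -> forall u, 0 < u -> sgn * phi u <= 0).
  { intros sgn Hs u Hu.
    apply (moments_vanish_nonpos (fun u => sgn * phi u)
             (fun u => continuous_Rmult _ _ u (continuous_const sgn u) (Hpc u)) B u);
      [|apply Hmom | exact Hu].
    intros v Hv. rewrite Rabs_mult, Hs, Rmult_1_l. apply HB, Hv. }
  assert (Hphi0 : forall u, 0 < u -> phi u = 0).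
  { intros u Hu. pose proof (Hsign 1 Rabs_R1 u Hu).
    pose proof (Hsign (-1) ltac:(rewrite Rabs_left; lra) u Hu). lra. }
  assert (Hpos : forall u, 0 < u -> h u = 0).
  { intros u Hu.
    assert (HD0 : is_derive (fun _ : R => 0) u (exp (- (a * u)) * ext_halfline h u)).
    { apply (is_derive_ext_loc phi); [|apply damped_primitive_derive, h_cont].
      exists (mkposreal (u / 2) ltac:(lra)). intros v Hv.
      change (Rabs (v - u) < u / 2) in Hv. apply Rabs_lt_between in Hv. apply Hphi0. lra. }
    apply is_derive_unique in HD0. rewrite Derive_const in HD0.
    unfold ext_halfline in HD0. rewrite Rmax_right in HD0 by lra.
    apply eq_sym, Rmult_integral in HD0 as [E|E]; [|exact E].
    pose proof (exp_pos (- (a * u))). lra. }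
  intros Ht. destruct (Req_dec t 0) as [->|Hne]; [|apply Hpos; lra].
  destruct (Req_dec (h 0) 0) as [|Hn]; [assumption|exfalso].
  destruct (h_cont 0 (Rle_refl 0) (Rabs (h 0)) ltac:(apply Rabs_pos_lt, Hn)) as [d [Hd Hd']].
  specialize (Hd' (d / 2) ltac:(lra) ltac:(rewrite Rminus_0_r, Rabs_right; lra)).
  rewrite Hpos, Rminus_0_l, Rabs_Ropp in Hd' by lra. lra.
Qed.

End LaplaceUniqueness.

Lemma inv_laplace_expsum (F : R -> R) (w : nat -> R) (f : R -> R) :
  (forall xi, 0 < xi -> ratsum w xi = F xi) -> inv_laplace F f ->
  forall t, 0 <= t -> f t = expsum w t.
Proof.
  intros HF [Hc [s0 Hl]] t Ht. apply Rminus_diag_uniq.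
  apply (laplace_zero_unique (fun t => f t - expsum w t) (Rmax s0 0));
    [apply cont_halfline_minus; [exact Hc | apply expsum_continuous] | | exact Ht].
  intros xi Hxi. pose proof (Rmax_l s0 0). pose proof (Rmax_r s0 0).
  assert (HM := is_RInt_gen_minus (V := R_NormedModule) (Fa := at_point 0)
                  (Fb := Rbar_locally p_infty) _ _ _ _ (Hl xi ltac:(lra)) (laplace_expsum w xi ltac:(lra))).
  rewrite HF in HM by lra.
  match type of HM with is_RInt_gen _ _ _ ?v =>
    replace v with 0 in HM by (unfold minus, plus, opp; simpl; ring) end.
  eapply is_RInt_gen_ext; [|exact HM].
  apply filter_forall. intros _ x _. unfold minus, plus, opp; simpl. ring.
Qed.

Lemma inv_laplace_cd (cr dr : nat -> R -> R) :
  (forall j : nat, (1 <= j <= M)%nat ->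
     inv_laplace (fun xi => c j xi / d 0 xi) (cr j) /\
     inv_laplace (fun xi => d j xi / d 0 xi) (dr j)) ->
  forall j t, (1 <= j <= 25)%nat -> 0 <= t -> cr j t = cring j t /\ dr j t = dring j t.
Proof.
  intros Hinv [|k] t Hj Ht; [lia|]. destruct (Hinv (S k) Hj) as [Hc Hd].
  split; [apply (inv_laplace_expsum _ _ _ (fun xi Hxi => proj1 (ratsum_cd_coef k xi ltac:(lia) Hxi)) Hc t Ht)
         |apply (inv_laplace_expsum _ _ _ (fun xi Hxi => proj2 (ratsum_cd_coef k xi ltac:(lia) Hxi)) Hd t Ht)].
Qed.

(** * A comparison principle for cooperative systems *)

Lemma deriv_nonpos_at_first_zero f tau l :
  is_derive f tau l -> f tau = 0 -> 0 < tau -> (forall r, 0 <= r < tau -> 0 < f r) -> l <= 0.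
Proof.
  intros Hd H0 Ht Hp. apply is_derive_Reals in Hd.
  apply Rnot_lt_le. intros Hl. destruct (Hd l Hl) as [dl Hdl].
  set (e := Rmin (dl / 2) (tau / 2)).
  assert (He : 0 < e) by (apply Rmin_pos; [pose proof (cond_pos dl)|]; lra).
  assert (He1 : e <= dl / 2) by apply Rmin_l.
  assert (He2 : e <= tau / 2) by apply Rmin_r.
  specialize (Hdl (- e) ltac:(lra) ltac:(rewrite Rabs_Ropp, Rabs_right; pose proof (cond_pos dl); lra)).
  rewrite H0, Rminus_0_r in Hdl.
  assert (Hf : 0 < f (tau + - e)) by (apply Hp; lra).
  assert (f (tau + - e) / - e < 0).
  { unfold Rdiv. apply Rmult_pos_neg; [exact Hf|]. apply Rinv_lt_0_compat. lra. }
  apply Rabs_lt_between in Hdl. lra.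
Qed.

Lemma cont_halfline_nonneg_at f tau :
  cont_halfline f -> 0 < tau -> (forall r, 0 <= r < tau -> 0 < f r) -> 0 <= f tau.
Proof.
  intros Hf Ht Hp. apply Rnot_lt_le. intros Hn.
  destruct (Hf tau (Rlt_le _ _ Ht) (- f tau) ltac:(lra)) as [d [Hd Hd']].
  set (r := Rmax 0 (tau - d / 2)).
  assert (Hr : 0 <= r < tau) by (split; [apply Rmax_l | apply Rmax_lub_lt; lra]).
  assert (Hrd : tau - d / 2 <= r) by apply Rmax_r.
  specialize (Hd' r (proj1 Hr) ltac:(rewrite Rabs_left1; lra)).
  pose proof (Hp r Hr). apply Rabs_lt_between in Hd'. lra.
Qed.

Lemma continuous_induction W :
  cont_halfline W ->
  (forall tau, 0 <= tau -> (forall r, 0 <= r < tau -> 0 < W r) -> 0 < W tau) ->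
  forall s, 0 <= s -> 0 < W s.
Proof.
  intros HW Hstep s1 Hs1.
  set (E := fun r => 0 <= r <= s1 /\ forall r', 0 <= r' <= r -> 0 < W r').
  assert (HE0 : E 0).
  { split; [lra|]. intros r' Hr'. replace r' with 0 by lra. apply Hstep; [lra | intros; lra]. }
  destruct (completeness E (ex_intro _ s1 (fun r Hr => proj2 (proj1 Hr))) (ex_intro _ 0 HE0))
    as [tau [Hub Hlub]].
  assert (Htau : 0 <= tau <= s1) by (split; [apply Hub, HE0 | apply Hlub; intros r [Hr _]; lra]).
  assert (Hbelow : forall r, 0 <= r < tau -> 0 < W r).
  { intros r Hr. apply Rnot_le_lt. intros Hn.
    assert (Hrub : is_upper_bound E r).
    { intros e [He1 He2]. apply Rnot_lt_le. intros Hre. specialize (He2 r ltac:(lra)). lra. }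
    specialize (Hlub r Hrub). lra. }
  assert (Hpos : 0 < W tau) by (apply Hstep; [apply Htau | exact Hbelow]).
  destruct (Req_dec tau s1) as [<-|Hne]; [exact Hpos | exfalso].
  destruct (HW tau (proj1 Htau) (W tau) Hpos) as [d [Hd Hnear]].
  set (s := Rmin (tau + d / 2) s1).
  assert (Hs : tau < s <= s1 /\ s <= tau + d / 2).
  { unfold s. pose proof (Rmin_l (tau + d / 2) s1). pose proof (Rmin_r (tau + d / 2) s1).
    split; [split; [apply Rmin_glb_lt; lra | lra] | lra]. }
  assert (HEs : E s).
  { split; [lra|]. intros r' Hr'. destruct (Rlt_dec r' tau); [apply Hbelow; lra|].
    specialize (Hnear r' ltac:(lra) ltac:(rewrite Rabs_right; lra)).
    apply Rabs_lt_between in Hnear. lra. }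
  specialize (Hub s HEs). lra.
Qed.

(* Shifting by [eps * exp s] makes the derivative strictly positive at a first zero. *)
Lemma cooperative_barrier (F G Z S : R -> R) (a eps tau : R) :
  0 <= a -> 0 < eps -> 0 < tau -> 0 <= Z tau <= 1 -> 0 <= S tau ->
  is_derive F tau (a * (Z tau * G tau - F tau) + S tau) ->
  (forall r, 0 <= r < tau -> 0 < F r + eps * exp r) -> 0 <= G tau + eps * exp tau ->
  F tau + eps * exp tau <> 0.
Proof.
  intros Ha He Ht HZ HS HF Hbelow HG H0.
  assert (HU : is_derive (fun s => F s + eps * exp s) tau
                 (a * (Z tau * G tau - F tau) + S tau + eps * exp tau)).
  { apply (is_derive_plus (V := R_NormedModule) F (fun s => eps * exp s)); [exact HF|].
    auto_derive; [exact I | ring]. }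
  pose proof (deriv_nonpos_at_first_zero _ _ _ HU H0 Ht Hbelow).
  pose proof (exp_pos tau).
  assert (0 <= Z tau * (G tau + eps * exp tau)) by (apply Rmult_le_pos; lra).
  assert (0 <= a * ((1 - Z tau) * (eps * exp tau))).
  { apply Rmult_le_pos; [exact Ha|]. apply Rmult_le_pos; [lra|]. apply Rmult_le_pos; lra. }
  assert (0 <= a * (Z tau * (G tau + eps * exp tau))) by (apply Rmult_le_pos; lra).
  assert (0 < eps * exp tau) by (apply Rmult_lt_0_compat; lra).
  nra.
Qed.

Lemma cooperative_comparison (A B X Y S1 S2 : R -> R) (a b : R) :
  0 <= a -> 0 <= b -> cont_halfline A -> cont_halfline B -> A 0 = 0 -> B 0 = 0 ->
  (forall s, 0 < s -> is_derive A s (a * (X s * B s - A s) + S1 s) /\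
                      is_derive B s (b * (Y s * A s - B s) + S2 s)) ->
  (forall s, 0 < s -> 0 <= X s <= 1 /\ 0 <= Y s <= 1 /\ 0 <= S1 s /\ 0 <= S2 s) ->
  forall s, 0 <= s -> 0 <= A s /\ 0 <= B s.
Proof.
  intros Ha Hb HcA HcB HA0 HB0 Hder Hsgn.
  assert (Hshift : forall eps, 0 < eps -> forall s, 0 <= s ->
            0 < Rmin (A s + eps * exp s) (B s + eps * exp s)).
  { intros eps He.
    assert (Hce : forall t, continuous (fun s => - (eps * exp s)) t).
    { intros t. apply (ex_derive_continuous (V := R_NormedModule)). auto_derive. exact I. }
    assert (Hshift_cont : forall F, cont_halfline F -> cont_halfline (fun s => F s + eps * exp s)).
    { intros F HF. apply (cont_halfline_ext _ _ (cont_halfline_minus F _ HF Hce)). intros; ring. }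
    apply continuous_induction; [apply cont_halfline_min; apply Hshift_cont; assumption|].
    intros tau Htau Hbelow.
    assert (HU : forall r, 0 <= r < tau -> 0 < A r + eps * exp r /\ 0 < B r + eps * exp r).
    { intros r Hr. specialize (Hbelow r Hr).
      pose proof (Rmin_l (A r + eps * exp r) (B r + eps * exp r)).
      pose proof (Rmin_r (A r + eps * exp r) (B r + eps * exp r)). lra. }
    destruct (Req_dec tau 0) as [->|Htau0].
    { rewrite HA0, HB0, exp_0, Rmin_left; lra. }
    assert (Htp : 0 < tau) by lra.
    pose proof (cont_halfline_nonneg_at _ tau (Hshift_cont A HcA) Htp (fun r Hr => proj1 (HU r Hr))).
    pose proof (cont_halfline_nonneg_at _ tau (Hshift_cont B HcB) Htp (fun r Hr => proj2 (HU r Hr))).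
    destruct (Hder tau Htp) as [HdA HdB]. destruct (Hsgn tau Htp) as [HX [HY [HS1 HS2]]].
    pose proof (cooperative_barrier A B X S1 a eps tau Ha He Htp HX HS1 HdA
                  (fun r Hr => proj1 (HU r Hr)) ltac:(assumption)).
    pose proof (cooperative_barrier B A Y S2 b eps tau Hb He Htp HY HS2 HdB
                  (fun r Hr => proj2 (HU r Hr)) ltac:(assumption)).
    apply Rmin_glb_lt; lra. }
  intros s Hs. pose proof (exp_pos s).
  split; apply Rnot_lt_le; intros Hneg.
  - specialize (Hshift (- A s / (2 * exp s)) ltac:(apply Rdiv_lt_0_compat; lra) s Hs).
    pose proof (Rmin_l (A s + - A s / (2 * exp s) * exp s) (B s + - A s / (2 * exp s) * exp s)).
    replace (- A s / (2 * exp s) * exp s) with (- A s / 2) in * by (field; lra). lra.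
  - specialize (Hshift (- B s / (2 * exp s)) ltac:(apply Rdiv_lt_0_compat; lra) s Hs).
    pose proof (Rmin_r (A s + - B s / (2 * exp s) * exp s) (B s + - B s / (2 * exp s) * exp s)).
    replace (- B s / (2 * exp s) * exp s) with (- B s / 2) in * by (field; lra). lra.
Qed.

(** * Characteristics *)

Definition charac (g0 s : R) : R := g0 * exp (- (4 * s)).
Definition weight (g0 s : R) : R := / (1 + charac g0 s ^ 2).
Definition csum (g0 s : R) : R := sum_upto (fun i => cring (S i) s * weight g0 s ^ S i) 25.
Definition dsum (g0 s : R) : R := sum_upto (fun i => dring (S i) s * weight g0 s ^ S i) 25.

Lemma charac_0 g0 : charac g0 0 = g0.
Proof. unfold charac. rewrite Rmult_0_r, Ropp_0, exp_0. ring. Qed.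

Lemma charac_derive g0 s : is_derive (charac g0) s (- 4 * charac g0 s).
Proof. unfold charac. auto_derive; [exact I | ring]. Qed.

Lemma weight_bounds g0 s : 0 < weight g0 s <= 1.
Proof.
  unfold weight. pose proof (pow2_ge_0 (charac g0 s)).
  split; [apply Rinv_0_lt_compat; lra|]. rewrite <- Rinv_1. apply Rinv_le_contravar; lra.
Qed.

Lemma weight_derive g0 s : is_derive (weight g0) s (8 * weight g0 s * (1 - weight g0 s)).
Proof.
  unfold weight, charac. pose proof (pow2_ge_0 (g0 * exp (- (4 * s)))) as H. simpl in H.
  auto_derive; [lra|]. field. lra.
Qed.

Lemma is_derive_weighted (f : R -> R) g0 s k df : is_derive f s df ->
  is_derive (fun s => f s * weight g0 s ^ S k) s
    (df * weight g0 s ^ S k + f s * (INR (S k) * (8 * weight g0 s * (1 - weight g0 s)) * weight g0 s ^ k)).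
Proof.
  intros Hf. apply (is_derive_Rmult f (fun s => weight g0 s ^ S k)); [exact Hf|].
  apply (is_derive_pow (weight g0) (S k)), weight_derive.
Qed.

(* The sums telescope thanks to the recursion defining c_j and d_j;
   only the boundary terms at j = 25 survive. *)
Lemma csum_derive g0 s :
  is_derive (csum g0) s (- 10 * csum g0 s + 10 * weight g0 s * dsum g0 s
                         - (200 * cring 25 s + 10 * dring 25 s) * weight g0 s ^ 26).
Proof.
  set (X := weight g0 s).
  set (T := fun i => (8 * INR i * cring i s + 10 * dring i s) * X ^ S i).
  replace (- 10 * csum g0 s + 10 * X * dsum g0 s - (200 * cring 25 s + 10 * dring 25 s) * X ^ 26)
    with (sum_upto (fun i => (- (8 * INR i + 18) * cring (S i) s + 8 * INR i * cring i s
                               + 10 * dring i s) * X ^ S i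
                             + cring (S i) s * (INR (S i) * (8 * X * (1 - X)) * X ^ i)) 25).
  - apply (sum_upto_derive (fun i s => cring (S i) s * weight g0 s ^ S i)
      (fun i s => (- (8 * INR i + 18) * cring (S i) s + 8 * INR i * cring i s + 10 * dring i s)
                    * weight g0 s ^ S i
                  + cring (S i) s * (INR (S i) * (8 * weight g0 s * (1 - weight g0 s))
                                     * weight g0 s ^ i))).
    intros i Hi.
    apply is_derive_weighted, cring_derive. lia.
  - transitivity (sum_upto (fun i => -10 * (cring (S i) s * X ^ S i)
                                     + 10 * X * (dring (S i) s * X ^ S i) + (T i - T (S i))) 25).
    + apply sum_upto_ext; intros i _; unfold T; rewrite S_INR; cbn [pow]; ring.
    + rewrite !sum_upto_plus, !sum_upto_scal, sum_upto_telescope.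
      unfold T, csum, dsum. fold X. rewrite cring_O, dring_O. simpl INR. ring.
Qed.

Lemma dsum_derive g0 s :
  is_derive (dsum g0) s (- 13 * dsum g0 s + 13 * csum g0 s - 200 * dring 25 s * weight g0 s ^ 26).
Proof.
  set (X := weight g0 s).
  set (T := fun i => 8 * INR i * dring i s * X ^ S i).
  replace (- 13 * dsum g0 s + 13 * csum g0 s - 200 * dring 25 s * X ^ 26)
    with (sum_upto (fun i => (- (8 * INR i + 21) * dring (S i) s + 13 * cring (S i) s
                               + 8 * INR i * dring i s) * X ^ S i
                             + dring (S i) s * (INR (S i) * (8 * X * (1 - X)) * X ^ i)) 25).
  - apply (sum_upto_derive (fun i s => dring (S i) s * weight g0 s ^ S i)
      (fun i s => (- (8 * INR i + 21) * dring (S i) s + 13 * cring (S i) s + 8 * INR i * dring i s)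
                    * weight g0 s ^ S i
                  + dring (S i) s * (INR (S i) * (8 * weight g0 s * (1 - weight g0 s))
                                     * weight g0 s ^ i))).
    intros i Hi.
    apply is_derive_weighted, dring_derive. lia.
  - transitivity (sum_upto (fun i => -13 * (dring (S i) s * X ^ S i)
                                     + 13 * (cring (S i) s * X ^ S i) + (T i - T (S i))) 25).
    + apply sum_upto_ext; intros i _; unfold T; rewrite S_INR; cbn [pow]; ring.
    + rewrite !sum_upto_plus, !sum_upto_scal, sum_upto_telescope.
      unfold T, csum, dsum. fold X. rewrite dring_O. simpl INR. ring.
Qed.

Lemma csum_init g0 : csum g0 0 = 10 * weight g0 0.
Proof.
  unfold csum. rewrite (sum_upto_ext _ (fun i => if Nat.eqb i 0 then 10 * weight g0 0 else 0));
    [apply sum_upto_delta; lia|].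
  intros i Hi. rewrite cring_init by exact Hi. destruct (Nat.eqb_spec i 0) as [->|]; simpl; ring.
Qed.

Lemma dsum_init g0 : dsum g0 0 = 0.
Proof.
  unfold dsum. rewrite (sum_upto_ext _ (fun _ => 0)); [apply sum_upto_zero|].
  intros i Hi. rewrite dring_init by exact Hi. ring.
Qed.

Lemma cont_halfline_along_charac (w : R -> R -> R) g0 :
  cont_quadrant w -> 0 <= g0 -> cont_halfline (fun s => w s (charac g0 s)).
Proof.
  intros Hw Hg t Ht eps He.
  assert (HG : forall s, 0 <= charac g0 s)
    by (intros; unfold charac; apply Rmult_le_pos; [lra | apply Rlt_le, exp_pos]).
  destruct (Hw t (charac g0 t) Ht (HG t) eps He) as [d [Hd H]].
  assert (Hc : continuous (charac g0) t)
    by (apply (ex_derive_continuous (V := R_NormedModule)); eexists; apply charac_derive).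
  destruct (continuous_eps (charac g0) t Hc d Hd) as [d2 [Hd2 H2]].
  exists (Rmin d d2). split; [apply Rmin_pos; assumption|].
  intros s Hs Hst. pose proof (Rmin_l d d2). pose proof (Rmin_r d d2).
  apply H; [exact Hs | apply HG | lra | apply H2; lra].
Qed.

Lemma is_derive_along_charac (w : R -> R -> R) g0 s dt dg :
  differentiable_pt_lim w s (charac g0 s) dt dg ->
  is_derive (fun s => w s (charac g0 s)) s (dt - 4 * charac g0 s * dg).
Proof.
  intros Hw. apply is_derive_Reals.
  replace (dt - 4 * charac g0 s * dg) with (dt * 1 + dg * (- 4 * charac g0 s)) by ring.
  apply (derivable_pt_lim_comp_2d w (fun s => s) (charac g0)); [exact Hw | apply derivable_pt_lim_id|].
  apply is_derive_Reals, charac_derive.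
Qed.

Definition alpha_charac (w1 : R -> R -> R) (g0 s : R) : R :=
  w1 s (charac g0 s) + 10 * exp (- (23 * s)) - csum g0 s.
Definition beta_charac (w2 : R -> R -> R) (g0 s : R) : R :=
  w2 s (charac g0 s) - dsum g0 s.

Lemma charac_system_derive w1 w2 g0 s : is_w_solution w1 w2 -> 0 < g0 -> 0 < s ->
  is_derive (alpha_charac w1 g0) s
    (10 * (weight g0 s * beta_charac w2 g0 s - alpha_charac w1 g0 s)
     + (200 * cring 25 s + 10 * dring 25 s) * weight g0 s ^ 26) /\
  is_derive (beta_charac w2 g0) s
    (13 * (1 * alpha_charac w1 g0 s - beta_charac w2 g0 s) + 200 * dring 25 s * weight g0 s ^ 26).
Proof.
  intros [_ [_ [_ Hpde]]] Hg0 Hs.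
  assert (Hg : 0 < charac g0 s) by (apply Rmult_lt_0_compat; [lra | apply exp_pos]).
  destruct (Hpde s (charac g0 s) Hs Hg) as [dt1 [dg1 [dt2 [dg2 [D1 [D2 [P1 P2]]]]]]].
  assert (HX : 10 / (1 + charac g0 s ^ 2) = 10 * weight g0 s) by (unfold weight, Rdiv; ring).
  unfold alpha_charac, beta_charac. split; eapply is_derive_ext; try reflexivity.
  - replace (10 * (weight g0 s * (w2 s (charac g0 s) - dsum g0 s)
                   - (w1 s (charac g0 s) + 10 * exp (- (23 * s)) - csum g0 s))
             + (200 * cring 25 s + 10 * dring 25 s) * weight g0 s ^ 26)
      with (dt1 - 4 * charac g0 s * dg1 + -230 * exp (- (23 * s))
            - (- 10 * csum g0 s + 10 * weight g0 s * dsum g0 s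
               - (200 * cring 25 s + 10 * dring 25 s) * weight g0 s ^ 26))
      by (rewrite HX in P1; lra).
    apply (is_derive_minus (V := R_NormedModule)); [|apply csum_derive].
    apply (is_derive_plus (V := R_NormedModule)); [apply is_derive_along_charac, D1|].
    auto_derive; [exact I | ring].
  - replace (13 * (1 * (w1 s (charac g0 s) + 10 * exp (- (23 * s)) - csum g0 s)
                   - (w2 s (charac g0 s) - dsum g0 s)) + 200 * dring 25 s * weight g0 s ^ 26)
      with (dt2 - 4 * charac g0 s * dg2
            - (- 13 * dsum g0 s + 13 * csum g0 s - 200 * dring 25 s * weight g0 s ^ 26))
      by lra.
    apply (is_derive_minus (V := R_NormedModule));
      [apply is_derive_along_charac, D2 | apply dsum_derive].
Qed.

Lemma beta_charac_nonneg w1 w2 g0 s : is_w_solution w1 w2 -> 0 < g0 -> 0 <= s ->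
  0 <= beta_charac w2 g0 s.
Proof.
  intros Hw Hg0 Hs. pose proof Hw as [Hc1 [Hc2 [Hinit _]]].
  assert (Hcsum : forall t, continuous (fun s => csum g0 s - 10 * exp (- (23 * s))) t).
  { intros t. apply (continuous_minus (V := R_NormedModule)).
    - apply (ex_derive_continuous (V := R_NormedModule)). eexists. apply csum_derive.
    - apply continuous_Rmult; [apply continuous_const | apply continuous_exp_lin]. }
  assert (Hdsum : forall t, continuous (dsum g0) t)
    by (intros; apply (ex_derive_continuous (V := R_NormedModule)); eexists; apply dsum_derive).
  refine (proj2 (cooperative_comparison (alpha_charac w1 g0) (beta_charac w2 g0) (weight g0) (fun _ => 1)
           (fun s => (200 * cring 25 s + 10 * dring 25 s) * weight g0 s ^ 26)
           (fun s => 200 * dring 25 s * weight g0 s ^ 26) 10 13 _ _ _ _ _ _ _ _ s Hs));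
    [lra | lra | | | | | intros t Ht; apply charac_system_derive; assumption |].
  - apply (cont_halfline_ext _ _ (cont_halfline_minus _ _
             (cont_halfline_along_charac w1 g0 Hc1 ltac:(lra)) Hcsum)).
    intros; unfold alpha_charac; ring.
  - exact (cont_halfline_minus _ _ (cont_halfline_along_charac w2 g0 Hc2 ltac:(lra)) Hdsum).
  - unfold alpha_charac. rewrite charac_0, (proj1 (Hinit g0 ltac:(lra))), csum_init.
    unfold weight. rewrite charac_0, Rmult_0_r, Ropp_0, exp_0.
    pose proof (pow2_ge_0 g0). field. lra.
  - unfold beta_charac. rewrite charac_0, (proj2 (Hinit g0 ltac:(lra))), dsum_init. ring.
  - intros t Ht. pose proof (weight_bounds g0 t).
    pose proof (PQ_cring_dring_nonneg t ltac:(lra)). pose proof (dring25_nonneg t ltac:(lra)).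
    assert (0 <= weight g0 t ^ 26) by (apply pow_le; lra).
    split; [lra | split; [lra | split; apply Rmult_le_pos; lra]].
Qed.

Definition dsum_at (t g : R) : R := sum_upto (fun i => dring (S i) t / (1 + g ^ 2) ^ S i) 25.

Lemma dsum_charac g0 s : dsum g0 s = dsum_at s (charac g0 s).
Proof. apply sum_upto_ext. intros i _. unfold weight. rewrite pow_inv. reflexivity. Qed.

Lemma dsum_at_continuous t g : continuous (dsum_at t) g.
Proof.
  apply (sum_upto_continuous (fun i g => dring (S i) t / (1 + g ^ 2) ^ S i)). intros i _.
  apply (ex_derive_continuous (V := R_NormedModule)).
  pose proof (pow2_ge_0 g). simpl in *. auto_derive.
  apply Rmult_integral_contrapositive; split; [|apply pow_nonzero]; lra.
Qed.

Lemma beta_eq_dsum_at (dr : nat -> R -> R) w2 t g :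
  (forall j, (1 <= j <= 25)%nat -> dr j t = dring j t) -> beta w2 dr t g = w2 t g - dsum_at t g.
Proof.
  intros Hdr. unfold beta. change M with (S 24). rewrite sum_f_1_sum_upto. f_equal.
  apply sum_upto_ext. intros i Hi. rewrite Hdr by lia. reflexivity.
Qed.

Lemma w2_dsum_at_nonneg w1 w2 t g : is_w_solution w1 w2 -> 0 <= t -> 0 <= g ->
  0 <= w2 t g - dsum_at t g.
Proof.
  intros Hw Ht Hg.
  assert (Hpos : forall h, 0 < h -> 0 <= w2 t h - dsum_at t h).
  { intros h Hh. set (g0 := h * exp (4 * t)).
    assert (HG : charac g0 t = h).
    { unfold charac, g0. rewrite Rmult_assoc, <- exp_plus, Rplus_opp_r, exp_0. ring. }
    rewrite <- HG, <- dsum_charac. apply (beta_charac_nonneg w1); [exact Hw | | exact Ht].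
    unfold g0. apply Rmult_lt_0_compat; [exact Hh | apply exp_pos]. }
  destruct (Req_dec g 0) as [->|]; [|apply Hpos; lra].
  apply Rnot_lt_le. intros Hneg. set (eps := - (w2 t 0 - dsum_at t 0) / 2).
  destruct Hw as [_ [Hc2 _]].
  destruct (Hc2 t 0 Ht (Rle_refl 0) eps ltac:(unfold eps; lra)) as [d1 [Hd1 H1]].
  destruct (continuous_eps (dsum_at t) 0 (dsum_at_continuous t 0) eps ltac:(unfold eps; lra))
    as [d2 [Hd2 H2]].
  set (h := Rmin d1 d2 / 2).
  pose proof (Rmin_pos d1 d2 Hd1 Hd2). pose proof (Rmin_l d1 d2). pose proof (Rmin_r d1 d2).
  assert (Hh : 0 < h /\ h < d1 /\ h < d2) by (unfold h; lra).
  specialize (H1 t h Ht ltac:(lra) ltac:(rewrite Rminus_diag, Rabs_R0; lra)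
                ltac:(rewrite Rminus_0_r, Rabs_right; lra)).
  specialize (H2 h ltac:(rewrite Rminus_0_r, Rabs_right; lra)).
  pose proof (Hpos h ltac:(lra)).
  apply Rabs_lt_between in H1, H2. unfold eps in *. lra.
Qed.

Theorem lemma2p4 (cr dr : nat -> R -> R) (w1 w2 : R -> R -> R) :
  (forall j : nat, (1 <= j <= M)%nat ->
     inv_laplace (fun xi => c j xi / d 0 xi) (cr j) /\
     inv_laplace (fun xi => d j xi / d 0 xi) (dr j)) ->
  is_w_solution w1 w2 ->
  (forall t g : R, 0 <= t -> 0 <= g -> 0 <= beta w2 dr t g) /\
  (forall t : R, 0 <= t -> 0 <= P_M cr dr t - Q_M dr t).
Proof.
  intros Hinv Hw. pose proof (inv_laplace_cd cr dr Hinv) as Hcd. split.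
  - intros t g Ht Hg.
    rewrite (beta_eq_dsum_at dr w2 t g (fun j Hj => proj2 (Hcd j t Hj Ht))).
    apply (w2_dsum_at_nonneg w1); assumption.
  - intros t Ht. destruct (Hcd 25%nat t ltac:(lia) Ht) as [Hc Hd].
    unfold P_M, Q_M, M. rewrite Hc, Hd. replace (INR 25) with 25 by (simpl; ring).
    pose proof (PQ_cring_dring_nonneg t Ht). lra.
Qed.
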